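(* Assume, in addition to the setting below, that at least one of the following holds: (H1) $f$ is differentiable on $\mathbb{R}^m$ with $L$-Lipschitz continuous gradient for some $L>0$; (H2) the restriction of $A$ to $\mathcal{M}(\Omega_0)$ is surjective onto $\mathbb{R}^m$. Then there is a subsequence of $(\mu_k,q_k)_{k\in\mathbb{N}}$ along which $\mu_k$ converges weak-$*$ (in $\mathcal{M}(\Omega)=\mathcal{C}_0(\Omega)^*$) to some $\mu_\infty$ and $q_k$ converges in $\mathbb{R}^m$ to some $q_\infty$, where $\mu_\infty$ solves $(\mathcal{P})$, $q_\infty$ solves $(\mathcal{D})$, and $J(\mu_k)\to J(\mu_\infty)=\inf(\mathcal{P})$ along this subsequence. If the solution of $(\mathcal{P})$ (respectively of $(\mathcal{D})$) is unique, then the whole sequence $(\mu_k)$ (respectively $(q_k)$) converges to it.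
   Context: Let $d,m\ge 1$ and let $\Omega\subseteq\mathbb{R}^d$ be a nonempty open set. $\mathcal{M}(\Omega)$ is the space of finite signed Radon measures on $\Omega$ with total variation norm $\|\cdot\|_{\mathcal{M}}$, identified with the dual of $\mathcal{C}_0(\Omega)$ (continuous functions vanishing at infinity, with sup-norm $\|\cdot\|_\infty$). For $\Omega'\subseteq\Omega$, $\mathcal{M}(\Omega')$ denotes the measures in $\mathcal{M}(\Omega)$ supported in $\Omega'$. Fix $a_1,\dots,a_m\in\mathcal{C}_0(\Omega)$; let $A:\mathcal{M}(\Omega)\to\mathbb{R}^m$, $(A\mu)_i=\int_\Omega a_i\,d\mu$, and for $q\in\mathbb{R}^m$ let $A^*q=\sum_{i=1}^m q_i a_i\in\mathcal{C}_0(\Omega)$. Let $f:\mathbb{R}^m\to\mathbb{R}\cup\{+\infty\}$ be proper, convex, lower semicontinuous and bounded from below, with convex conjugate $f^*(q)=\sup_{y}\langle q,y\rangle-f(y)$. Put $J(\mu)=\|\mu\|_{\mathcal{M}}+f(A\mu)$. For $\Omega'\subseteq\Omega$, $(\mathcal{P}(\Omega'))$ is the problem $\inf_{\mu\in\mathcal{M}(\Omega')}J(\mu)$ and $(\mathcal{D}(\Omega'))$ is $\sup\{-f^*(q):q\in\mathbb{R}^m,\ |A^*q(x)|\le 1\ \forall x\in\Omega'\}$; $(\mathcal{P})=(\mathcal{P}(\Omega))$ and $(\mathcal{D})=(\mathcal{D}(\Omega))$. Standing assumption: for $\Omega'=\Omega$ and for each $\Omega'=\Omega_k$ below, both problems admit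 solutions and their optimal values coincide (no duality gap). Exchange algorithm: a set $\Omega_0\subseteq\Omega$ is given; for $k\ge 0$, $\mu_k$ is a solution of $(\mathcal{P}(\Omega_k))$, $q_k$ a solution of $(\mathcal{D}(\Omega_k))$, $X_k$ is the set of all local maximizers $x\in\Omega$ of $|A^*q_k|$ with $|A^*q_k(x)|>1$, and $\Omega_{k+1}=\Omega_k\cup X_k$. *)

From Stdlib Require Import Reals Lra Classical ClassicalEpsilon FunctionalExtensionality.
From Stdlib Require Vectors.Fin.
Open Scope R_scope.

Definition vec (n : nat) := Fin.t n -> R.

Fixpoint fsum (n : nat) : (Fin.t n -> R) -> R :=
  match n return (Fin.t n -> R) -> R with
  | O => fun _ => 0
  | S k => fun g => g Fin.F1 + fsum k (fun i => g (Fin.FS i))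
  end.

Definition dot {n} (x y : vec n) : R := fsum n (fun i => x i * y i).
Definition vnorm {n} (x : vec n) : R := sqrt (dot x x).
Definition vsub {n} (x y : vec n) : vec n := fun i => x i - y i.
Definition vadd {n} (x y : vec n) : vec n := fun i => x i + y i.
Definition vscale {n} (t : R) (x : vec n) : vec n := fun i => t * x i.
Definition dist {n} (x y : vec n) : R := vnorm (vsub x y).

Definition is_open {d} (U : vec d -> Prop) : Prop :=
  forall x, U x -> exists r, 0 < r /\ forall y, dist x y < r -> U y.
Definition is_closed {d} (K : vec d -> Prop) : Prop := is_open (fun x => ~ K x).
Definition is_bounded {d} (K : vec d -> Prop) : Prop :=
  exists M, forall x, K x -> vnorm x <= M.
Definition is_compact {d} (K : vec d -> Prop) : Prop := is_closed K /\ is_bounded K.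

(** C_0(Om): continuous functions on Om vanishing at infinity (extended by 0
    outside Om, so that elements are uniquely determined). *)
Definition C0 {d} (Om : vec d -> Prop) (phi : vec d -> R) : Prop :=
  (forall x, ~ Om x -> phi x = 0) /\
  (forall x, Om x -> forall eps, 0 < eps -> exists del, 0 < del /\
      forall y, Om y -> dist x y < del -> Rabs (phi y - phi x) < eps) /\
  (forall eps, 0 < eps -> exists K, is_compact K /\ (forall x, K x -> Om x) /\
      forall x, Om x -> ~ K x -> Rabs (phi x) < eps).

(** M(Om) = C_0(Om)^*: bounded linear functionals on C_0(Om); a functional is
    represented as a map on all functions, forced to be 0 off C_0(Om). *)
Definition meas (d : nat) := (vec d -> R) -> R.

Definition IsMeas {d} (Om : vec d -> Prop) (mu : meas d) : Prop :=
  (forall phi, ~ C0 Om phi -> mu phi = 0) /\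
  (forall phi psi c, C0 Om phi -> C0 Om psi ->
      mu (fun x => phi x + c * psi x) = mu phi + c * mu psi) /\
  (exists C, forall phi r, C0 Om phi -> (forall x, Rabs (phi x) <= r) ->
      Rabs (mu phi) <= C * r).

(** |mu|^*(E) = 0 (outer total variation measure of E vanishes, computed via
    the Riesz construction: |mu|(U) = sup { mu phi : phi in C0, |phi|<=1,
    phi = 0 off U } for open U). *)
Definition var_null {d} (Om : vec d -> Prop) (mu : meas d) (E : vec d -> Prop) : Prop :=
  forall eps, 0 < eps -> exists U, is_open U /\ (forall x, E x -> U x) /\
    forall phi, C0 Om phi -> (forall x, Rabs (phi x) <= 1) ->
      (forall x, ~ U x -> phi x = 0) -> mu phi <= eps.

Definition supported_in {d} (Om : vec d -> Prop) (mu : meas d) (Om' : vec d -> Prop) : Prop :=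
  var_null Om mu (fun x => Om x /\ ~ Om' x).

(** Extended reals R ∪ {+oo}: None = +oo. *)
Definition ereal := option R.
Definition ele (a b : ereal) : Prop :=
  match a, b with
  | _, None => True
  | None, Some _ => False
  | Some x, Some y => x <= y
  end.

Definition esup (E : R -> Prop) : ereal :=
  match excluded_middle_informative (bound E /\ exists x, E x) with
  | left H => Some (proj1_sig (completeness E (proj1 H) (proj2 H)))
  | right _ => None
  end.

Definition mnorm {d} (Om : vec d -> Prop) (mu : meas d) : R :=
  match esup (fun r => exists phi, C0 Om phi /\ (forall x, Rabs (phi x) <= 1) /\ r = mu phi) with
  | Some v => v
  | None => 0
  end.

Definition Aop {d m} (a : Fin.t m -> vec d -> R) (mu : meas d) : vec m :=
  fun i => mu (a i).
Definition Astar {d m} (a : Fin.t m -> vec d -> R) (q : vec m) : vec d -> R :=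
  fun x => fsum m (fun i => q i * a i x).

Definition Jfun {d m} (Om : vec d -> Prop) (a : Fin.t m -> vec d -> R)
  (f : vec m -> ereal) (mu : meas d) : ereal :=
  match f (Aop a mu) with
  | None => None
  | Some v => Some (mnorm Om mu + v)
  end.

(** convex conjugate, values in R ∪ {+oo} (f proper so the set is nonempty) *)
Definition fstar {m} (f : vec m -> ereal) (q : vec m) : ereal :=
  esup (fun r => exists y v, f y = Some v /\ r = dot q y - v).

Definition proper {m} (f : vec m -> ereal) : Prop := exists x v, f x = Some v.
Definition convex {m} (f : vec m -> ereal) : Prop :=
  forall x y vx vy t, f x = Some vx -> f y = Some vy -> 0 < t < 1 ->
    exists v, f (vadd (vscale t x) (vscale (1 - t) y)) = Some v /\
              v <= t * vx + (1 - t) * vy.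
Definition lsc {m} (f : vec m -> ereal) : Prop :=
  forall x c, ~ ele (f x) (Some c) ->
    exists del, 0 < del /\ forall y, dist x y < del -> ~ ele (f y) (Some c).
Definition bounded_below {m} (f : vec m -> ereal) : Prop :=
  exists b, forall x v, f x = Some v -> b <= v.

Definition solP {d m} (Om : vec d -> Prop) (a : Fin.t m -> vec d -> R)
  (f : vec m -> ereal) (Om' : vec d -> Prop) (mu : meas d) : Prop :=
  IsMeas Om mu /\ supported_in Om mu Om' /\
  forall nu, IsMeas Om nu -> supported_in Om nu Om' ->
    ele (Jfun Om a f mu) (Jfun Om a f nu).

Definition feasD {d m} (a : Fin.t m -> vec d -> R) (Om' : vec d -> Prop) (q : vec m) : Prop :=
  forall x, Om' x -> Rabs (Astar a q x) <= 1.

(** q maximizes -f^*(q), i.e. minimizes f^*(q), over feasible q *)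
Definition solD {d m} (a : Fin.t m -> vec d -> R) (f : vec m -> ereal)
  (Om' : vec d -> Prop) (q : vec m) : Prop :=
  feasD a Om' q /\ forall q', feasD a Om' q' -> ele (fstar f q) (fstar f q').

(** optimal values coincide: inf (P) = J mu = -f^*(q) = sup (D) *)
Definition no_gap {d m} (Om : vec d -> Prop) (a : Fin.t m -> vec d -> R)
  (f : vec m -> ereal) (mu : meas d) (q : vec m) : Prop :=
  exists v, Jfun Om a f mu = Some v /\ fstar f q = Some (- v).

Definition Xset {d m} (Om : vec d -> Prop) (a : Fin.t m -> vec d -> R) (q : vec m)
  (x : vec d) : Prop :=
  Om x /\ 1 < Rabs (Astar a q x) /\
  exists r, 0 < r /\ forall y, Om y -> dist x y < r ->
    Rabs (Astar a q y) <= Rabs (Astar a q x).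

Definition H1 {m} (f : vec m -> ereal) : Prop :=
  exists (fr : vec m -> R) (g : vec m -> vec m) (L : R),
    0 < L /\ (forall x, f x = Some (fr x)) /\
    (forall x eps, 0 < eps -> exists del, 0 < del /\ forall h, vnorm h < del ->
       Rabs (fr (vadd x h) - fr x - dot (g x) h) <= eps * vnorm h) /\
    (forall x y, vnorm (vsub (g x) (g y)) <= L * vnorm (vsub x y)).

Definition H2 {d m} (Om : vec d -> Prop) (a : Fin.t m -> vec d -> R) (Om0 : vec d -> Prop) : Prop :=
  forall y : vec m, exists mu, IsMeas Om mu /\ supported_in Om mu Om0 /\
    forall i, Aop a mu i = y i.

Definition weakstar_cv {d} (Om : vec d -> Prop) (mus : nat -> meas d) (mu : meas d) : Prop :=
  forall phi, C0 Om phi -> Un_cv (fun k => mus k phi) (mu phi).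
Definition vec_cv {m} (qs : nat -> vec m) (q : vec m) : Prop :=
  forall i, Un_cv (fun k => qs k i) (q i).
Definition ecv (u : nat -> ereal) (l : ereal) : Prop :=
  match l with
  | Some L => forall eps, 0 < eps -> exists N, forall n, (N <= n)%nat ->
                exists v, u n = Some v /\ Rabs (v - L) < eps
  | None => forall M, exists N, forall n, (N <= n)%nat -> ~ ele (u n) (Some M)
  end.
Definition strictly_increasing (phi : nat -> nat) : Prop :=
  forall n, (phi n < phi (S n))%nat.

(** With v_k = J(mu_k) = -f^*(q_k) the values of the discretized problems:
    - Omega_k increases, so v_k decreases to a limit >= inf (P), and
      ||mu_k|| <= v_0 - inf f is bounded;
    - (H1) (via Fenchel-Young) or (H2) (testing A^* q_k against measures on
      Omega_0 with prescribed moments) bounds the dual iterates q_k;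
    - bounded sequences in M(Omega) have weak-* convergent subsequences, since
      C_0(Omega) is separable (a countable dense family is built from tents
      with rational data), and bounded sequences in R^m converge along
      subsequences;
    - limit points of (q_k) are dual feasible: |A^* q| > 1 somewhere would make
      |A^* q_k| exceed 1 at a global maximizer already added to Omega_{k+1};
    - lower semicontinuity of f^*, f and the total variation then gives
      v_k -> inf (P) and optimality of the limits.
    Uniqueness upgrades this to convergence of the whole sequence, since every
    subsequence has a further subsequence converging to the solution. *)

From Stdlib Require Import Reals Lra Lia Classical ClassicalEpsilon FunctionalExtensionality.
From Stdlib Require Import Arith.Cantor ZArith List.
From Stdlib Require Vectors.Fin.
Open Scope R_scope.

Lemma fsum_ext n (g h : Fin.t n -> R) : (forall i, g i = h i) -> fsum n g = fsum n h.
Proof.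
  revert g h; induction n; intros g h H; simpl; auto.
  rewrite H, (IHn _ (fun i => h (Fin.FS i))); auto.
Qed.

Lemma fsum_plus n (g h : Fin.t n -> R) : fsum n (fun i => g i + h i) = fsum n g + fsum n h.
Proof.
  revert g h; induction n; intros g h; simpl; [lra|].
  rewrite (IHn (fun i => g (Fin.FS i)) (fun i => h (Fin.FS i))); lra.
Qed.

Lemma fsum_scal n c (g : Fin.t n -> R) : fsum n (fun i => c * g i) = c * fsum n g.
Proof.
  revert g; induction n; intros g; simpl; [lra|].
  rewrite (IHn (fun i => g (Fin.FS i))); lra.
Qed.

Lemma fsum_le n (g h : Fin.t n -> R) : (forall i, g i <= h i) -> fsum n g <= fsum n h.
Proof.
  revert g h; induction n; intros g h H; simpl; [lra|].
  pose proof (H Fin.F1).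
  pose proof (IHn (fun i => g (Fin.FS i)) (fun i => h (Fin.FS i)) (fun i => H _)); lra.
Qed.

Lemma fsum_const n c : fsum n (fun _ => c) = INR n * c.
Proof. induction n; simpl; [lra|]. rewrite IHn. destruct n; simpl; lra. Qed.

Lemma fsum_nonneg n (g : Fin.t n -> R) : (forall i, 0 <= g i) -> 0 <= fsum n g.
Proof. intros H. pose proof (fsum_le n (fun _ => 0) g H). rewrite fsum_const in H0. lra. Qed.

Lemma fsum_abs n (g : Fin.t n -> R) : Rabs (fsum n g) <= fsum n (fun i => Rabs (g i)).
Proof.
  revert g; induction n; intros g; simpl; [rewrite Rabs_R0; lra|].
  pose proof (IHn (fun i => g (Fin.FS i))).
  pose proof (Rabs_triang (g Fin.F1) (fsum n (fun i => g (Fin.FS i)))); lra.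
Qed.

Lemma fsum_single n (g : Fin.t n -> R) i : (forall j, 0 <= g j) -> g i <= fsum n g.
Proof.
  revert g; induction n; intros g H; [inversion i|].
  simpl. refine (Fin.caseS' i (fun i => g i <= g Fin.F1 + fsum n (fun i => g (Fin.FS i))) _ _); simpl.
  - pose proof (fsum_nonneg n (fun j => g (Fin.FS j)) (fun j => H _)); lra.
  - intros p. pose proof (IHn p (fun j => g (Fin.FS j)) (fun j => H _)). pose proof (H Fin.F1); lra.
Qed.

Lemma fsum_sq_le n (g : Fin.t n -> R) :
  fsum n (fun i => g i * g i) <= fsum n (fun i => Rabs (g i)) * fsum n (fun i => Rabs (g i)).
Proof.
  revert g; induction n; intros g; simpl; [lra|].
  pose proof (IHn (fun i => g (Fin.FS i))).
  pose proof (fsum_nonneg n (fun i => Rabs (g (Fin.FS i))) (fun i => Rabs_pos _)).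
  pose proof (Rabs_pos (g Fin.F1)).
  assert (g Fin.F1 * g Fin.F1 = Rabs (g Fin.F1) * Rabs (g Fin.F1))
    by (rewrite <- Rabs_mult, Rabs_right; [lra | apply Rle_ge, Rle_0_sqr]).
  nra.
Qed.

Lemma cv_const (u : nat -> R) c : (forall k, u k = c) -> Un_cv u c.
Proof. intros H eps He. exists O. intros. unfold Rdist. rewrite H, Rminus_diag, Rabs_R0. auto. Qed.

Lemma fsum_cv n (g : nat -> Fin.t n -> R) (l : Fin.t n -> R) :
  (forall i, Un_cv (fun k => g k i) (l i)) -> Un_cv (fun k => fsum n (g k)) (fsum n l).
Proof.
  revert g l; induction n; intros g l H; simpl.
  - apply cv_const; auto.
  - apply CV_plus; [apply H|]. apply (IHn (fun k i => g k (Fin.FS i))). intros; apply H.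
Qed.

(** The Euclidean norm is compared with the l^1 norm, for which the triangle
    inequality is immediate; this avoids Cauchy-Schwarz. *)
Definition l1norm {n} (x : vec n) : R := fsum n (fun i => Rabs (x i)).

Lemma l1norm_nonneg {n} (x : vec n) : 0 <= l1norm x.
Proof. apply fsum_nonneg; intros; apply Rabs_pos. Qed.

Lemma vnorm_nonneg {n} (x : vec n) : 0 <= vnorm x.
Proof. apply sqrt_pos. Qed.

Lemma coord_le_vnorm {n} (x : vec n) i : Rabs (x i) <= vnorm x.
Proof.
  unfold vnorm. rewrite <- sqrt_Rsqr_abs. apply sqrt_le_1_alt. unfold Rsqr, dot.
  apply (fsum_single n (fun i => x i * x i)). intros; apply Rle_0_sqr.
Qed.

Lemma vnorm_le_l1 {n} (x : vec n) : vnorm x <= l1norm x.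
Proof.
  unfold vnorm. rewrite <- (sqrt_Rsqr (l1norm x)) by apply l1norm_nonneg.
  apply sqrt_le_1_alt. apply fsum_sq_le.
Qed.

Lemma l1_le_vnorm {n} (x : vec n) : l1norm x <= INR n * vnorm x.
Proof. unfold l1norm. rewrite <- fsum_const. apply fsum_le. intros; apply coord_le_vnorm. Qed.

Lemma l1_lt_of_coords {n} (x : vec n) eps :
  0 < eps -> (forall i, Rabs (x i) <= eps / (INR n + 1)) -> l1norm x < eps.
Proof.
  intros He H. pose proof (pos_INR n).
  apply Rle_lt_trans with (INR n * (eps / (INR n + 1))).
  - unfold l1norm. rewrite <- fsum_const. apply fsum_le. auto.
  - apply Rmult_lt_reg_r with (INR n + 1); [lra|].
    replace (INR n * (eps / (INR n + 1)) * (INR n + 1)) with (INR n * eps) by (field; lra). nra.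
Qed.

Lemma l1_triang {n} (x y : vec n) : l1norm (vadd x y) <= l1norm x + l1norm y.
Proof. unfold l1norm, vadd. rewrite <- fsum_plus. apply fsum_le; intros; apply Rabs_triang. Qed.

Lemma l1_sub_sym {n} (x y : vec n) : l1norm (vsub x y) = l1norm (vsub y x).
Proof. unfold l1norm, vsub. apply fsum_ext; intros. rewrite Rabs_minus_sym; auto. Qed.

Lemma l1_sub_triang {n} (x y z : vec n) : l1norm (vsub x z) <= l1norm (vsub x y) + l1norm (vsub y z).
Proof.
  unfold l1norm, vsub. rewrite <- fsum_plus. apply fsum_le; intros.
  replace (x i - z i) with ((x i - y i) + (y i - z i)) by ring. apply Rabs_triang.
Qed.

Lemma l1_sub_lip {n} (x y c : vec n) :
  Rabs (l1norm (vsub x c) - l1norm (vsub y c)) <= l1norm (vsub x y).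
Proof.
  pose proof (l1_sub_triang x y c). pose proof (l1_sub_triang y x c).
  rewrite (l1_sub_sym y x) in H0. apply Rabs_le; lra.
Qed.

Lemma dist_sym {n} (x y : vec n) : dist x y = dist y x.
Proof. unfold dist, vnorm, dot, vsub. f_equal. apply fsum_ext; intros; ring. Qed.

Lemma dist_le_l1 {n} (x y : vec n) : dist x y <= l1norm (vsub x y).
Proof. apply vnorm_le_l1. Qed.

Lemma l1_le_dist {n} (x y : vec n) : l1norm (vsub x y) <= INR n * dist x y.
Proof. apply l1_le_vnorm. Qed.

(** A weak triangle inequality, sufficient for all limit arguments below. *)
Lemma dist_triang {n} (x y z : vec n) : dist x z <= INR n * (dist x y + dist y z).
Proof.
  pose proof (dist_le_l1 x z). pose proof (l1_sub_triang x y z).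
  pose proof (l1_le_dist x y). pose proof (l1_le_dist y z). rewrite Rmult_plus_distr_l; lra.
Qed.

Lemma dot_cv {n} (q : nat -> vec n) (ql : vec n) y :
  vec_cv q ql -> Un_cv (fun k => dot (q k) y) (dot ql y).
Proof.
  intros H. unfold dot. apply (fsum_cv n (fun k i => q k i * y i)). intros i.
  apply CV_mult; [apply H | apply cv_const; auto].
Qed.

Definition unitvec {n} (i : Fin.t n) : vec n := fun j => if Fin.eq_dec j i then 1 else 0.

Lemma dot_unitvec {n} (q : vec n) i : dot q (unitvec i) = q i.
Proof.
  unfold dot, unitvec. revert q i; induction n; intros q i; [inversion i|].
  simpl. refine (Fin.caseS' i (fun i => q Fin.F1 * (if Fin.eq_dec Fin.F1 i then 1 else 0) +
    fsum n (fun j => q (Fin.FS j) * (if Fin.eq_dec (Fin.FS j) i then 1 else 0)) = q i) _ _).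
  - destruct (Fin.eq_dec Fin.F1 Fin.F1) as [_|C]; [|congruence].
    rewrite (fsum_ext n _ (fun _ => 0)), fsum_const; [ring|].
    intros j. destruct (Fin.eq_dec (Fin.FS j) Fin.F1) as [C|_]; [inversion C|ring].
  - intros p. destruct (Fin.eq_dec Fin.F1 (Fin.FS p)) as [C|_]; [inversion C|].
    rewrite <- (IHn (fun j => q (Fin.FS j)) p), Rmult_0_r, Rplus_0_l. apply fsum_ext. intros j.
    destruct (Fin.eq_dec (Fin.FS j) (Fin.FS p)) as [E|E]; destruct (Fin.eq_dec j p) as [E'|E']; auto.
    + exfalso; apply E', Fin.FS_inj; auto.
    + exfalso; apply E; subst; auto.
Qed.

Lemma dot_neg_unitvec {n} (q : vec n) i : dot q (vscale (-1) (unitvec i)) = - q i.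
Proof.
  rewrite <- (dot_unitvec q i). unfold dot, vscale.
  rewrite <- (Rmult_1_l (fsum n _)). replace 1 with (-(-1)) by ring.
  rewrite Ropp_mult_distr_l_reverse, <- fsum_scal. f_equal. apply fsum_ext; intros; ring.
Qed.

Lemma choose_fun {A B : Type} (P : A -> B -> Prop) :
  (forall a, exists b, P a b) -> exists F : A -> B, forall a, P a (F a).
Proof.
  intros H. exists (fun a => proj1_sig (constructive_indefinite_description _ (H a))).
  intros a. exact (proj2_sig (constructive_indefinite_description _ (H a))).
Qed.

Lemma si_id : strictly_increasing (fun n => n).
Proof. intro; lia. Qed.

Lemma si_ge s : strictly_increasing s -> forall n, (n <= s n)%nat.
Proof. intros H n; induction n; [lia|]. specialize (H n). lia. Qed.

Lemma si_lt s : strictly_increasing s -> forall n m, (n < m)%nat -> (s n < s m)%nat.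
Proof. intros H n m Hnm. induction Hnm; [apply H|]. specialize (H m). lia. Qed.

Lemma si_comp s t :
  strictly_increasing s -> strictly_increasing t -> strictly_increasing (fun n => s (t n)).
Proof. intros Hs Ht n. apply si_lt; auto. Qed.

Lemma inv_small eps : 0 < eps -> exists N, forall k, (N <= k)%nat -> / INR (S k) < eps.
Proof.
  intros H. destruct (archimed_cor1 eps H) as [N [HN1 HN2]]. exists N. intros k Hk.
  eapply Rle_lt_trans; [|exact HN1].
  apply Rinv_le_contravar; [apply lt_0_INR; lia | apply le_INR; lia].
Qed.

Lemma inv_le_subseq s k : strictly_increasing s -> / INR (S (s k)) <= / INR (S k).
Proof.
  intros Hs. apply Rinv_le_contravar; [apply lt_0_INR; lia|].
  apply le_INR. pose proof (si_ge s Hs k); lia.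
Qed.

Lemma cv_subseq u l s : Un_cv u l -> strictly_increasing s -> Un_cv (fun n => u (s n)) l.
Proof.
  intros H Hs eps Heps. destruct (H eps Heps) as [N HN]. exists N. intros n Hn.
  apply HN. pose proof (si_ge s Hs n). lia.
Qed.

Lemma cv_ext u v l : (forall k, u k = v k) -> Un_cv u l -> Un_cv v l.
Proof. intros H Hu eps He. destruct (Hu eps He) as [N HN]. exists N. intros; rewrite <- H; auto. Qed.

Lemma Rabs_le_inv x B : Rabs x <= B -> - B <= x <= B.
Proof.
  intros H. pose proof (Rle_abs x). pose proof (Rle_abs (- x)). rewrite Rabs_Ropp in H1. lra.
Qed.

Lemma cv_le_bound u l M : Un_cv u l -> (forall k, u k <= M) -> l <= M.
Proof.
  intros H Hb. apply Rnot_lt_le. intros Hl. destruct (H (l - M)) as [N HN]; [lra|].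
  specialize (HN N (le_n _)). specialize (Hb N). unfold Rdist in HN.
  pose proof (Rle_abs (-(u N - l))). rewrite Rabs_Ropp in H0. lra.
Qed.

Lemma cv_ge_bound u l M : Un_cv u l -> (forall k, M <= u k) -> M <= l.
Proof.
  intros H Hb. apply Ropp_le_cancel, (cv_le_bound (fun k => - u k)); [|intros k; specialize (Hb k); lra].
  intros eps He. destruct (H eps He) as [N HN]. exists N. intros n Hn.
  unfold Rdist. replace (- u n - - l) with (- (u n - l)) by ring. rewrite Rabs_Ropp. apply HN; auto.
Qed.

Lemma cv_abs_bound u l M : Un_cv u l -> (forall k, Rabs (u k) <= M) -> Rabs l <= M.
Proof.
  intros H Hb. apply Rabs_le. split.
  - apply (cv_ge_bound u); auto. intros k; specialize (Hb k). apply Rabs_le_inv in Hb. lra.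
  - apply (cv_le_bound u); auto. intros k; specialize (Hb k). apply Rabs_le_inv in Hb. lra.
Qed.

Lemma subseq_choice (P : nat -> nat -> Prop) :
  (forall k N, exists p, (N <= p)%nat /\ P k p) ->
  exists s, strictly_increasing s /\ forall k, P k (s k).
Proof.
  intros H.
  destruct (choose_fun (fun kN p => (snd kN <= p)%nat /\ P (fst kN) p)) as [F HF].
  { intros [k N]. apply H. }
  set (s := fix s k := match k with O => F (O, O) | S k => F (S k, S (s k)) end).
  exists s. split.
  - intros k. change (s (S k)) with (F (S k, S (s k))). pose proof (proj1 (HF (S k, S (s k)))).
    simpl in H0. lia.
  - intros [|k]; [apply (HF (O, O))|]. apply (HF (S k, S (s k))).
Qed.

Lemma cluster_subseq u l :
  (forall eps N, 0 < eps -> exists p, (N <= p)%nat /\ Rabs (u p - l) < eps) ->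
  exists s, strictly_increasing s /\ Un_cv (fun n => u (s n)) l.
Proof.
  intros H.
  destruct (subseq_choice (fun k p => Rabs (u p - l) < / INR (S k))) as [s [Hs Hk]].
  { intros k N. apply H, Rinv_0_lt_compat, lt_0_INR; lia. }
  exists s. split; auto. intros eps Heps. destruct (inv_small eps Heps) as [N HN].
  exists N. intros n Hn. unfold Rdist. eapply Rlt_trans; [apply Hk | apply HN; auto].
Qed.

Lemma bounded_subseq (u : nat -> R) B : (forall n, Rabs (u n) <= B) ->
  exists s l, strictly_increasing s /\ Un_cv (fun n => u (s n)) l.
Proof.
  intros HB. destruct (Bolzano_Weierstrass u (fun x => - B <= x <= B)) as [l Hl].
  - apply compact_P3.
  - intros n. apply Rabs_le_inv, HB.
  - destruct (cluster_subseq u l) as [s Hs].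
    + intros eps N Heps. apply (Hl (fun x => Rabs (x - l) < eps) N).
      exists (mkposreal eps Heps). intros y Hy. exact Hy.
    + exists s, l; auto.
Qed.

Lemma bounded_vec_subseq {m} (u : nat -> vec m) B : (forall k i, Rabs (u k i) <= B) ->
  exists s q, strictly_increasing s /\ vec_cv (fun k => u (s k)) q.
Proof.
  revert u; induction m as [|m IH]; intros u HB.
  - exists (fun k => k), (fun _ => 0). split; [apply si_id | intros i; inversion i].
  - destruct (bounded_subseq (fun k => u k Fin.F1) B) as [s1 [l1 [Hs1 Hl1]]]; [intros; apply HB|].
    destruct (IH (fun k i => u (s1 k) (Fin.FS i))) as [s2 [q2 [Hs2 Hq2]]]; [intros; apply HB|].
    exists (fun k => s1 (s2 k)), (fun i => Fin.caseS' i (fun _ => R) l1 q2).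
    split; [apply si_comp; auto|].
    intros i. refine (Fin.caseS' i (fun i => Un_cv (fun k => u (s1 (s2 k)) i)
                         (Fin.caseS' i (fun _ => R) l1 q2)) _ _); simpl.
    + apply (cv_subseq (fun k => u (s1 k) Fin.F1)); auto.
    + intros p. apply Hq2.
Qed.

Lemma not_cv_subseq u l : ~ Un_cv u l ->
  exists eps s, 0 < eps /\ strictly_increasing s /\ forall k, eps <= Rabs (u (s k) - l).
Proof.
  intros Hn.
  assert (exists eps, 0 < eps /\ forall N, exists p, (N <= p)%nat /\ eps <= Rabs (u p - l))
    as [eps [He HN]].
  { apply NNPP; intros Hc. apply Hn. intros eps He. apply NNPP; intros Hc2. apply Hc.
    exists eps. split; auto. intros N. apply NNPP; intros Hc3. apply Hc2. exists N.
    intros n Hn'. apply Rnot_le_lt. intros Hl. apply Hc3; eauto. }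
  destruct (subseq_choice (fun _ p => eps <= Rabs (u p - l))) as [s [Hs Hk]]; [intros; apply HN|].
  exists eps, s. auto.
Qed.

Lemma cv_of_subsubseq u l :
  (forall s0, strictly_increasing s0 ->
     exists t, strictly_increasing t /\ Un_cv (fun k => u (s0 (t k))) l) -> Un_cv u l.
Proof.
  intros H. apply NNPP; intros Hn.
  destruct (not_cv_subseq _ _ Hn) as [eps [s0 [He [Hs0 Hfar]]]].
  destruct (H s0 Hs0) as [t [_ Ht]]. destruct (Ht eps He) as [N HN].
  specialize (HN N (le_n _)). specialize (Hfar (t N)). unfold Rdist in HN. lra.
Qed.

Section Diagonal.
Variable U : nat -> nat -> R.
Variable B : nat -> R.
Hypothesis HB : forall j k, Rabs (U j k) <= B j.

Lemma diag_step (sg : nat -> nat) (j : nat) :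
  {t | strictly_increasing t /\ exists l, Un_cv (fun k => U j (sg (t k))) l}.
Proof.
  apply constructive_indefinite_description.
  destruct (bounded_subseq (fun k => U j (sg k)) (B j)) as [t [l [Ht Hl]]]; [intros; apply HB|].
  exists t. split; eauto.
Qed.

(** [nested n] is the subsequence along which [U 0], ..., [U (n-1)] converge. *)
Fixpoint nested (n : nat) : nat -> nat :=
  match n with
  | O => fun k => k
  | S n => fun k => nested n (proj1_sig (diag_step (nested n) n) k)
  end.

Lemma nested_si n : strictly_increasing (nested n).
Proof.
  induction n; [apply si_id|]. simpl. apply si_comp; auto.
  apply (proj1 (proj2_sig (diag_step (nested n) n))).
Qed.

Lemma nested_refines j n : (j <= n)%nat ->
  exists r, strictly_increasing r /\ forall k, nested n k = nested j (r k).
Proof.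
  induction 1 as [|n _ [r [Hr Hk]]].
  - exists (fun k => k). split; auto. apply si_id.
  - exists (fun k => r (proj1_sig (diag_step (nested n) n) k)). split.
    + apply si_comp; auto. apply (proj1 (proj2_sig (diag_step (nested n) n))).
    + intros k. simpl. apply Hk.
Qed.

Lemma diagonal_subseq : exists s, strictly_increasing s /\
  forall j, exists l, Un_cv (fun k => U j (s k)) l.
Proof.
  exists (fun n => nested (S n) n). split.
  - intros n. change (nested (S (S n)) (S n))
      with (nested (S n) (proj1_sig (diag_step (nested (S n)) (S n)) (S n))).
    apply si_lt; [apply nested_si|].
    pose proof (si_ge _ (proj1 (proj2_sig (diag_step (nested (S n)) (S n)))) (S n)). lia.
  - intros j. destruct (proj2 (proj2_sig (diag_step (nested j) j))) as [l Hl]. exists l.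
    intros eps He. destruct (Hl eps He) as [N HN]. exists (max N j). intros n Hn.
    destruct (nested_refines (S j) (S n)) as [r [Hr Hk]]; [lia|].
    rewrite Hk. apply HN. pose proof (si_ge r Hr n). lia.
Qed.
End Diagonal.

(** * Compactness in R^d *)

Definition dcv {d} (u : nat -> vec d) (x : vec d) : Prop :=
  forall eps, 0 < eps -> exists N, forall k, (N <= k)%nat -> dist x (u k) < eps.

Lemma fin_eventually n (P : Fin.t n -> nat -> Prop) :
  (forall i N M, (N <= M)%nat -> P i N -> P i M) -> (forall i, exists N, P i N) ->
  exists N, forall i, P i N.
Proof.
  revert P; induction n; intros P Hm H; [exists O; intros i; inversion i|].
  destruct (IHn (fun i => P (Fin.FS i))) as [N1 HN1]; [intros; eapply Hm; eauto | intros; apply H|].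
  destruct (H Fin.F1) as [N0 HN0]. exists (max N0 N1). intros i.
  refine (Fin.caseS' i (fun i => P i (max N0 N1)) _ _).
  - eapply Hm; [|exact HN0]. lia.
  - intros p. eapply Hm; [|apply HN1]. lia.
Qed.

Lemma vec_cv_dcv {d} (u : nat -> vec d) x : vec_cv u x -> dcv u x.
Proof.
  intros H eps Heps. set (e := eps / (INR d + 1)).
  assert (He : 0 < e) by (unfold e; apply Rdiv_lt_0_compat; [|pose proof (pos_INR d)]; lra).
  destruct (fin_eventually d (fun i N => forall k, (N <= k)%nat -> Rabs (u k i - x i) < e)) as [N HN].
  - intros i N M HNM HN k Hk. apply HN; lia.
  - intros i. apply (H i e He).
  - exists N. intros k Hk. eapply Rle_lt_trans; [apply dist_le_l1|].
    apply l1_lt_of_coords; auto. intros i. unfold vsub. rewrite Rabs_minus_sym. left; apply HN; auto.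
Qed.

Lemma dcv_close {d} (u w : nat -> vec d) x :
  dcv u x -> (forall k, dist (u k) (w k) < / INR (S k)) -> dcv w x.
Proof.
  intros H Hw eps Heps. pose proof (pos_INR d). set (e := eps / (2 * (INR d + 1))).
  assert (He : 0 < e) by (unfold e; apply Rdiv_lt_0_compat; lra).
  destruct (H e He) as [N1 HN1]. destruct (inv_small e He) as [N2 HN2].
  exists (max N1 N2). intros k Hk. eapply Rle_lt_trans; [apply (dist_triang x (u k) (w k))|].
  pose proof (HN1 k ltac:(lia)). pose proof (HN2 k ltac:(lia)). pose proof (Hw k).
  apply Rle_lt_trans with (INR d * (2 * e)); [apply Rmult_le_compat_l; lra|].
  unfold e. apply Rmult_lt_reg_r with (INR d + 1); [lra|].
  replace (INR d * (2 * (eps / (2 * (INR d + 1)))) * (INR d + 1)) with (INR d * eps)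
    by (field; lra). nra.
Qed.

Lemma compact_seq {d} (K : vec d -> Prop) (u : nat -> vec d) :
  is_compact K -> (forall k, K (u k)) ->
  exists s x, strictly_increasing s /\ K x /\ dcv (fun k => u (s k)) x.
Proof.
  intros [Hc [M HM]] Hu.
  destruct (bounded_vec_subseq u M) as [s [x [Hs Hx]]].
  { intros k i. eapply Rle_trans; [apply coord_le_vnorm | apply HM, Hu]. }
  apply vec_cv_dcv in Hx. exists s, x. split; auto. split; auto.
  apply NNPP; intros Hn. destruct (Hc x Hn) as [r [Hr Hb]]. destruct (Hx r Hr) as [N HN].
  apply (Hb (u (s N))); [apply HN; lia | apply Hu].
Qed.

Lemma compact_close_pairs {d} (K : vec d -> Prop) (p : nat -> vec d * vec d) :
  is_compact K -> (forall n, K (fst (p n))) ->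
  (forall n, dist (fst (p n)) (snd (p n)) < / INR (S n)) ->
  exists s x, strictly_increasing s /\ K x /\
    dcv (fun k => fst (p (s k))) x /\ dcv (fun k => snd (p (s k))) x.
Proof.
  intros HK HKp Hd. destruct (compact_seq K (fun n => fst (p n)) HK HKp) as [s [x [Hs [Kx Hx]]]].
  exists s, x. repeat split; auto.
  apply (dcv_close _ _ _ Hx). intros k. eapply Rlt_le_trans; [apply Hd | apply inv_le_subseq; auto].
Qed.

Lemma compact_union {d} (K1 K2 : vec d -> Prop) :
  is_compact K1 -> is_compact K2 -> is_compact (fun x => K1 x \/ K2 x).
Proof.
  intros [C1 [M1 B1]] [C2 [M2 B2]]. split.
  - intros x Hx. assert (~ K1 x /\ ~ K2 x) as [H1 H2] by tauto.
    destruct (C1 x H1) as [r1 [Hr1 Hb1]]. destruct (C2 x H2) as [r2 [Hr2 Hb2]].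
    exists (Rmin r1 r2). split; [apply Rmin_pos; auto|].
    intros y Hy [Hk|Hk].
    + apply (Hb1 y); auto. eapply Rlt_le_trans; [apply Hy | apply Rmin_l].
    + apply (Hb2 y); auto. eapply Rlt_le_trans; [apply Hy | apply Rmin_r].
  - exists (Rmax M1 M2). intros x [Hk|Hk].
    + eapply Rle_trans; [apply B1; auto | apply Rmax_l].
    + eapply Rle_trans; [apply B2; auto | apply Rmax_r].
Qed.

Lemma l1ball_compact {d} (c : vec d) del : is_compact (fun y => l1norm (vsub y c) <= del).
Proof.
  split.
  - intros x Hx. apply Rnot_le_lt in Hx. pose proof (pos_INR d).
    set (g := l1norm (vsub x c) - del).
    exists (g / (INR d + 1)). split; [apply Rdiv_lt_0_compat; unfold g; lra|].
    intros y Hy Hn. pose proof (l1_sub_lip x y c). pose proof (l1_le_dist x y).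
    assert (INR d * (g / (INR d + 1)) < g).
    { apply Rmult_lt_reg_r with (INR d + 1); [lra|].
      replace (INR d * (g / (INR d + 1)) * (INR d + 1)) with (INR d * g) by (field; lra).
      unfold g; nra. }
    assert (INR d * dist x y <= INR d * (g / (INR d + 1))) by (apply Rmult_le_compat_l; lra).
    pose proof (Rle_abs (l1norm (vsub x c) - l1norm (vsub y c))). unfold g in *. lra.
  - exists (del + l1norm c). intros y Hy. eapply Rle_trans; [apply vnorm_le_l1|].
    pose proof (l1_triang (vsub y c) c). replace (vadd (vsub y c) c) with y in H; [lra|].
    apply functional_extensionality; intros i; unfold vadd, vsub; ring.
Qed.

Lemma separated_no_cv {d} (u : nat -> vec d) r s x : 0 < r ->
  (forall m n, (m < n)%nat -> r <= l1norm (vsub (u n) (u m))) ->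
  strictly_increasing s -> ~ dcv (fun k => u (s k)) x.
Proof.
  intros Hr Hsep Hs Hx. pose proof (pos_INR d). set (e := r / (2 * (INR d + 1))).
  assert (He : 0 < e) by (unfold e; apply Rdiv_lt_0_compat; lra).
  destruct (Hx e He) as [N HN].
  pose proof (HN N (le_n _)) as Hc1. pose proof (HN (S N) (le_S _ _ (le_n _))) as Hc2.
  pose proof (Hsep (s N) (s (S N)) (Hs N)) as Hfar.
  pose proof (l1_sub_triang (u (s (S N))) x (u (s N))) as Htri.
  pose proof (l1_le_dist (u (s (S N))) x) as Hd1. pose proof (l1_le_dist x (u (s N))) as Hd2.
  rewrite (dist_sym (u (s (S N))) x) in Hd1.
  assert (INR d * e * 2 < r).
  { unfold e. apply Rmult_lt_reg_r with (INR d + 1); [lra|].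
    replace (INR d * (r / (2 * (INR d + 1))) * 2 * (INR d + 1)) with (INR d * r) by (field; lra).
    nra. }
  assert (INR d * dist x (u (s (S N))) <= INR d * e) by (apply Rmult_le_compat_l; lra).
  assert (INR d * dist x (u (s N)) <= INR d * e) by (apply Rmult_le_compat_l; lra).
  lra.
Qed.

(** Compact sets are totally bounded (finite r-nets for the l^1 distance):
    otherwise a greedy choice yields an r-separated sequence in K. *)
Lemma totally_bounded {d} (K : vec d -> Prop) r : is_compact K -> 0 < r ->
  exists P : list (vec d), (forall p, In p P -> K p) /\
    forall x, K x -> exists p, In p P /\ l1norm (vsub x p) < r.
Proof.
  intros HK Hr. apply NNPP; intros Hn.
  assert (HF : forall P : list (vec d), exists x, (forall p, In p P -> K p) ->
             K x /\ forall p, In p P -> r <= l1norm (vsub x p)).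
  { intros P. destruct (classic (forall p, In p P -> K p)) as [HP|HP].
    - apply NNPP; intros Hc. apply Hn. exists P. split; auto. intros x Kx.
      apply NNPP; intros Hc2. apply Hc. exists x. intros _. split; auto.
      intros p Hp. apply Rnot_lt_le. intros Hl. apply Hc2. eauto.
    - exists (fun _ => 0). intros H; contradiction. }
  destruct (choose_fun _ HF) as [F HFs].
  set (hist := fix hist n := match n with O => nil | S n => cons (F (hist n)) (hist n) end).
  assert (HK1 : forall n p, In p (hist n) -> K p).
  { induction n; simpl; [intros p []|]. intros p [<-|Hp]; auto. apply (HFs (hist n)); auto. }
  set (u := fun n => F (hist n)).
  assert (Ku : forall n, K (u n)) by (intros n; apply (HFs (hist n)), HK1).
  destruct (compact_seq K u HK Ku) as [s [x [Hs [_ Hx]]]].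
  apply (separated_no_cv u r s x Hr); auto.
  intros m n Hmn. apply (HFs (hist n)); [apply HK1|].
  induction Hmn; simpl; [left | right]; auto.
Qed.

Lemma compact_margin {d} (Om : vec d -> Prop) K :
  is_open Om -> is_compact K -> (forall x, K x -> Om x) ->
  exists rho, 0 < rho /\ forall x y, K x -> dist x y < rho -> Om y.
Proof.
  intros HO HK HKO. apply NNPP; intros Hn.
  assert (Hs : forall n, exists p : vec d * vec d,
             K (fst p) /\ dist (fst p) (snd p) < / INR (S n) /\ ~ Om (snd p)).
  { intros n. apply NNPP; intros Hn2. apply Hn. exists (/ INR (S n)).
    split; [apply Rinv_0_lt_compat, lt_0_INR; lia|].
    intros x y Kx Hd. apply NNPP; intros Hy. apply Hn2. exists (x, y); simpl; auto. }
  destruct (choose_fun _ Hs) as [p Hp].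
  destruct (compact_close_pairs K p HK) as [s [x [_ [Kx [_ Hy]]]]]; try apply Hp.
  destruct (HO x (HKO x Kx)) as [r [Hr Hb]]. destruct (Hy r Hr) as [N HN].
  apply (proj2 (proj2 (Hp (s N)))). apply Hb, HN; lia.
Qed.

(** * The space C_0(Omega) *)

Lemma C0_seq {d} (Om : vec d -> Prop) phi (u : nat -> vec d) x :
  C0 Om phi -> Om x -> (forall k, Om (u k)) -> dcv u x -> Un_cv (fun k => phi (u k)) (phi x).
Proof.
  intros [_ [Hc _]] Hx Hu H eps Heps. destruct (Hc x Hx eps Heps) as [del [Hdel Hd]].
  destruct (H del Hdel) as [N HN]. exists N. intros k Hk. apply Hd; auto.
Qed.

Lemma C0_bounded {d} (Om : vec d -> Prop) phi : C0 Om phi -> exists M, forall x, Rabs (phi x) <= M.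
Proof.
  intros HC. pose proof HC as [H0 [_ Hinf]]. destruct (Hinf 1 Rlt_0_1) as [K [HK [HKO HKb]]].
  assert (HKbd : exists M, forall x, K x -> Rabs (phi x) <= M).
  { apply NNPP; intros Hn.
    assert (Hu : forall n, exists x, K x /\ INR n < Rabs (phi x)).
    { intros n. apply NNPP; intros Hn2. apply Hn. exists (INR n). intros x Kx.
      apply Rnot_lt_le. intros Hl. apply Hn2; eauto. }
    destruct (choose_fun _ Hu) as [u Hu'].
    destruct (compact_seq K u HK) as [s [x [Hs [Kx Hx]]]]; [intros; apply Hu'|].
    pose proof (C0_seq Om phi (fun k => u (s k)) x HC (HKO x Kx) (fun k => HKO _ (proj1 (Hu' _))) Hx)
      as Hcv.
    destruct (maj_by_pos _ (exist _ _ Hcv)) as [M [_ HM]].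
    destruct (INR_unbounded M) as [N HN].
    pose proof (HM N). pose proof (proj2 (Hu' (s N))). pose proof (le_INR _ _ (si_ge s Hs N)). lra. }
  destruct HKbd as [M HM]. exists (Rmax M 1). intros x.
  destruct (classic (K x)); [eapply Rle_trans; [apply HM; auto | apply Rmax_l]|].
  destruct (classic (Om x)).
  - left. eapply Rlt_le_trans; [apply HKb; auto | apply Rmax_r].
  - rewrite H0, Rabs_R0 by auto. eapply Rle_trans; [|apply Rmax_r]. lra.
Qed.

Lemma compact_abs_max {d} (Om : vec d -> Prop) phi K x0 :
  C0 Om phi -> is_compact K -> (forall x, K x -> Om x) -> K x0 ->
  exists x, K x /\ forall y, K y -> Rabs (phi y) <= Rabs (phi x).
Proof.
  intros HC HK HKO Kx0. destruct (C0_bounded Om phi HC) as [M HM].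
  set (E := fun r => exists y, K y /\ r = Rabs (phi y)).
  destruct (completeness E) as [Sup [HS1 HS2]].
  { exists M. intros r [y [_ ->]]. apply HM. }
  { exists (Rabs (phi x0)), x0; auto. }
  assert (Hseq : forall n, exists y, K y /\ Sup - / INR (S n) < Rabs (phi y)).
  { intros n. apply NNPP; intros Hn. assert (Sup <= Sup - / INR (S n)).
    { apply HS2. intros r [y [Ky ->]]. apply Rnot_lt_le. intros Hl. apply Hn; eauto. }
    pose proof (Rinv_0_lt_compat (INR (S n)) (lt_0_INR _ (Nat.lt_0_succ n))). lra. }
  destruct (choose_fun _ Hseq) as [u Hu].
  destruct (compact_seq K u HK) as [s [x [Hs [Kx Hx]]]]; [intros; apply Hu|].
  pose proof (C0_seq Om phi (fun k => u (s k)) x HC (HKO x Kx) (fun k => HKO _ (proj1 (Hu _))) Hx)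
    as Hcv.
  exists x. split; auto. intros y Ky. apply Rnot_lt_le. intros Hl.
  (* the values along the maximizing sequence would exceed the value at the limit *)
  set (g := Rabs (phi y) - Rabs (phi x)). assert (Hg : 0 < g / 2) by (unfold g; lra).
  assert (Sy : Rabs (phi y) <= Sup) by (apply HS1; exists y; auto).
  destruct (Hcv _ Hg) as [N1 HN1]. destruct (inv_small _ Hg) as [N2 HN2].
  set (k := max N1 N2). specialize (HN1 k ltac:(unfold k; lia)). specialize (HN2 k ltac:(unfold k; lia)).
  pose proof (inv_le_subseq s k Hs). pose proof (proj2 (Hu (s k))).
  unfold Rdist in HN1. pose proof (Rabs_triang_inv (phi (u (s k))) (phi x)). unfold g in *. lra.
Qed.

Lemma C0_abs_max {d} (Om : vec d -> Prop) psi x0 : C0 Om psi -> Om x0 -> 0 < Rabs (psi x0) ->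
  exists x, Om x /\ forall y, Rabs (psi y) <= Rabs (psi x).
Proof.
  intros HC Hx0 Hpos. pose proof HC as [H0 [_ Hinf]].
  destruct (Hinf _ Hpos) as [K [HK [HKO HKb]]].
  assert (Kx0 : K x0) by (apply NNPP; intros Hn; specialize (HKb x0 Hx0 Hn); lra).
  destruct (compact_abs_max Om psi K x0 HC HK HKO Kx0) as [x [Kx Hmax]].
  exists x. split; auto. intros y.
  destruct (classic (K y)); auto. destruct (classic (Om y)).
  - pose proof (HKb y H1 H). pose proof (Hmax x0 Kx0). lra.
  - rewrite H0, Rabs_R0 by auto. apply Rabs_pos.
Qed.

Lemma C0_unif {d} (Om : vec d -> Prop) phi K : C0 Om phi -> is_compact K -> (forall x, K x -> Om x) ->
  forall eps, 0 < eps -> exists del, 0 < del /\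
    forall x y, K x -> Om y -> dist x y < del -> Rabs (phi y - phi x) < eps.
Proof.
  intros HC HK HKO eps Heps. apply NNPP; intros Hn.
  assert (Hs : forall n, exists p : vec d * vec d, K (fst p) /\ Om (snd p) /\
             dist (fst p) (snd p) < / INR (S n) /\ eps <= Rabs (phi (snd p) - phi (fst p))).
  { intros n. apply NNPP; intros Hn2. apply Hn. exists (/ INR (S n)).
    split; [apply Rinv_0_lt_compat, lt_0_INR; lia|].
    intros x y Kx Oy Hd. apply Rnot_le_lt. intros Hl. apply Hn2. exists (x, y); simpl; auto. }
  destruct (choose_fun _ Hs) as [p Hp].
  destruct (compact_close_pairs K p HK) as [s [x [_ [Kx [Hx Hy]]]]]; try apply Hp.
  pose proof (C0_seq Om phi _ x HC (HKO x Kx) (fun k => HKO _ (proj1 (Hp _))) Hx) as H1.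
  pose proof (C0_seq Om phi _ x HC (HKO x Kx) (fun k => proj1 (proj2 (Hp _))) Hy) as H2.
  destruct (H1 (eps/2) ltac:(lra)) as [N1 HN1]. destruct (H2 (eps/2) ltac:(lra)) as [N2 HN2].
  set (k := max N1 N2). specialize (HN1 k ltac:(unfold k; lia)). specialize (HN2 k ltac:(unfold k; lia)).
  pose proof (proj2 (proj2 (proj2 (Hp (s k))))). unfold Rdist in *.
  pose proof (Rabs_triang (phi (snd (p (s k))) - phi x) (phi x - phi (fst (p (s k))))).
  rewrite (Rabs_minus_sym (phi x)) in H0.
  replace (phi (snd (p (s k))) - phi x + (phi x - phi (fst (p (s k)))))
    with (phi (snd (p (s k))) - phi (fst (p (s k)))) in H0 by ring.
  lra.
Qed.

Lemma C0_comp2 {d} (Om : vec d -> Prop) (h : R -> R -> R) L phi psi : 0 < L -> h 0 0 = 0 ->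
  (forall a b a' b', Rabs (h a b - h a' b') <= L * (Rabs (a - a') + Rabs (b - b'))) ->
  C0 Om phi -> C0 Om psi -> C0 Om (fun x => h (phi x) (psi x)).
Proof.
  intros HL H0 Hlip [Z1 [C1 V1]] [Z2 [C2 V2]].
  assert (Habs : forall a b, Rabs (h a b) <= L * (Rabs a + Rabs b)).
  { intros a b. specialize (Hlip a b 0 0). rewrite H0, !Rminus_0_r in Hlip. exact Hlip. }
  assert (He : forall eps, 0 < eps -> 0 < eps / (2 * L)) by (intros; apply Rdiv_lt_0_compat; lra).
  assert (Hsplit : forall eps u v, 0 < eps -> u < eps / (2 * L) -> v < eps / (2 * L) -> L * (u + v) < eps).
  { intros eps u v Heps Hu Hv. replace eps with (L * (eps / (2 * L) + eps / (2 * L))) by (field; lra).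
    apply Rmult_lt_compat_l; lra. }
  split; [|split].
  - intros x Hx. rewrite Z1, Z2; auto.
  - intros x Hx eps Heps.
    destruct (C1 x Hx _ (He eps Heps)) as [d1 [Hd1 Hb1]]. destruct (C2 x Hx _ (He eps Heps)) as [d2 [Hd2 Hb2]].
    exists (Rmin d1 d2). split; [apply Rmin_pos; auto|]. intros y Hy Hd.
    eapply Rle_lt_trans; [apply Hlip|]. apply Hsplit; [exact Heps| |].
    + apply Hb1; auto. eapply Rlt_le_trans; [apply Hd | apply Rmin_l].
    + apply Hb2; auto. eapply Rlt_le_trans; [apply Hd | apply Rmin_r].
  - intros eps Heps.
    destruct (V1 _ (He eps Heps)) as [K1 [HK1 [HO1 Hb1]]]. destruct (V2 _ (He eps Heps)) as [K2 [HK2 [HO2 Hb2]]].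
    exists (fun x => K1 x \/ K2 x). split; [apply compact_union; auto|]. split; [intros x [|]; auto|].
    intros x Hx Hn. eapply Rle_lt_trans; [apply Habs|]. apply Hsplit; [exact Heps| |].
    + apply Hb1; tauto.
    + apply Hb2; tauto.
Qed.

Lemma C0_ext {d} (Om : vec d -> Prop) phi psi : C0 Om phi -> (forall x, phi x = psi x) -> C0 Om psi.
Proof. intros H E. replace psi with phi; auto. apply functional_extensionality; auto. Qed.

Lemma C0_zero {d} (Om : vec d -> Prop) : C0 Om (fun _ => 0).
Proof.
  split; [|split]; auto.
  - intros x _ eps He. exists 1. split; [lra|]. intros. rewrite Rminus_0_r, Rabs_R0. auto.
  - intros eps He. exists (fun _ => False). split; [split|split].
    + intros x _. exists 1. split; [lra|auto].
    + exists 0. intros x [].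
    + intros x [].
    + intros. rewrite Rabs_R0; auto.
Qed.

Lemma C0_lin {d} (Om : vec d -> Prop) phi psi c :
  C0 Om phi -> C0 Om psi -> C0 Om (fun x => phi x + c * psi x).
Proof.
  intros H1 H2. pose proof (Rabs_pos c).
  apply (C0_comp2 Om (fun a b => a + c * b) (1 + Rabs c)); auto; [lra | ring|].
  intros a b a' b'. replace (a + c * b - (a' + c * b')) with ((a - a') + c * (b - b')) by ring.
  eapply Rle_trans; [apply Rabs_triang|]. rewrite Rabs_mult.
  pose proof (Rabs_pos (a - a')). pose proof (Rabs_pos (b - b')). nra.
Qed.

Lemma C0_scal {d} (Om : vec d -> Prop) psi c : C0 Om psi -> C0 Om (fun x => c * psi x).
Proof. intros H. apply (C0_ext Om (fun x => 0 + c * psi x)); [apply C0_lin; auto; apply C0_zero | intros; ring]. Qed.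

Lemma C0_sub {d} (Om : vec d -> Prop) phi psi : C0 Om phi -> C0 Om psi -> C0 Om (fun x => phi x - psi x).
Proof. intros H1 H2. apply (C0_ext Om (fun x => phi x + (-1) * psi x)); [apply C0_lin; auto | intros; ring]. Qed.

Lemma Rmax_lip a b a' b' : Rabs (Rmax a b - Rmax a' b') <= Rabs (a - a') + Rabs (b - b').
Proof.
  unfold Rmax. pose proof (Rle_abs (a-a')). pose proof (Rle_abs (b-b')).
  pose proof (Rle_abs (-(a-a'))). pose proof (Rle_abs (-(b-b'))). rewrite Rabs_Ropp in *.
  destruct (Rle_dec a b); destruct (Rle_dec a' b'); apply Rabs_le; lra.
Qed.

Lemma C0_max {d} (Om : vec d -> Prop) phi psi : C0 Om phi -> C0 Om psi -> C0 Om (fun x => Rmax (phi x) (psi x)).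
Proof.
  intros H1 H2. apply (C0_comp2 Om Rmax 1); auto; [lra | unfold Rmax; destruct Rle_dec; auto|].
  intros. rewrite Rmult_1_l. apply Rmax_lip.
Qed.

Lemma C0_comp1 {d} (Om : vec d -> Prop) (g : R -> R) phi :
  g 0 = 0 -> (forall a b, Rabs (g a - g b) <= Rabs (a - b)) -> C0 Om phi -> C0 Om (fun x => g (phi x)).
Proof.
  intros H0 Hl H. apply (C0_comp2 Om (fun a _ => g a) 1 phi phi); auto; [lra|].
  intros. pose proof (Hl a a'). pose proof (Rabs_pos (b - b')). lra.
Qed.

Lemma C0_Astar {d m} (Om : vec d -> Prop) (a : Fin.t m -> vec d -> R) q :
  (forall i, C0 Om (a i)) -> C0 Om (Astar a q).
Proof.
  unfold Astar. revert a q; induction m; intros a q Ha; simpl; [apply C0_zero|].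
  apply (C0_ext Om (fun x => q Fin.F1 * a Fin.F1 x + 1 * fsum m (fun i => q (Fin.FS i) * a (Fin.FS i) x)));
    [|intros; ring].
  apply C0_lin; [apply C0_scal; auto|]. apply (IHm (fun i => a (Fin.FS i))). intros; apply Ha.
Qed.

Lemma esup_some_ub E v r : esup E = Some v -> E r -> r <= v.
Proof.
  unfold esup. destruct excluded_middle_informative; intros Heq; inversion Heq.
  destruct (completeness E _ _) as [S [HS1 HS2]]. simpl. auto.
Qed.

Lemma esup_some_lub E v b : esup E = Some v -> (forall r, E r -> r <= b) -> v <= b.
Proof.
  unfold esup. destruct excluded_middle_informative; intros Heq; inversion Heq.
  destruct (completeness E _ _) as [S [HS1 HS2]]. simpl. auto.
Qed.

Lemma esup_bound E b : (exists r, E r) -> (forall r, E r -> r <= b) ->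
  exists v, esup E = Some v /\ v <= b.
Proof.
  intros Hn Hb. unfold esup. destruct excluded_middle_informative as [H|H].
  - destruct (completeness E _ _) as [S [HS1 HS2]]. simpl. exists S; split; auto.
  - exfalso; apply H. split; auto. exists b. intros r Hr; apply Hb; auto.
Qed.

Lemma esup_approx E v eps : esup E = Some v -> 0 < eps -> exists r, E r /\ v - eps < r.
Proof.
  intros H He. apply NNPP; intros Hc.
  assert (v <= v - eps); [|lra].
  apply (esup_some_lub E); auto. intros r Hr. apply Rnot_lt_le. intros Hl; apply Hc; eauto.
Qed.

Section Functional.
Context {d : nat} (Om : vec d -> Prop) (mu : meas d) (Hmu : IsMeas Om mu).

Lemma meas_lin phi psi c : C0 Om phi -> C0 Om psi ->
  mu (fun x => phi x + c * psi x) = mu phi + c * mu psi.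
Proof. apply (proj1 (proj2 Hmu)). Qed.

(** Linearity in the form used for rewriting: a pointwise identity
    chi = phi + c psi transfers to the values of [mu]. *)
Lemma meas_comb phi psi c chi : C0 Om phi -> C0 Om psi ->
  (forall x, chi x = phi x + c * psi x) -> mu chi = mu phi + c * mu psi.
Proof.
  intros H1 H2 E. replace chi with (fun x => phi x + c * psi x); [apply meas_lin; auto|].
  apply functional_extensionality; intros; auto.
Qed.

Lemma meas_zero : mu (fun _ => 0) = 0.
Proof.
  assert (E : mu (fun _ => 0) = mu (fun _ => 0) + 1 * mu (fun _ => 0))
    by (apply meas_comb; [apply C0_zero | apply C0_zero | intros; ring]).
  lra.
Qed.

Lemma meas_scal psi c : C0 Om psi -> mu (fun x => c * psi x) = c * mu psi.
Proof.
  intros H. rewrite (meas_comb (fun _ => 0) psi c); [rewrite meas_zero; ring | apply C0_zero | auto |].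
  intros; ring.
Qed.

Lemma meas_sub phi psi : C0 Om phi -> C0 Om psi -> mu (fun x => phi x - psi x) = mu phi - mu psi.
Proof. intros H1 H2. rewrite (meas_comb phi psi (-1)); auto; [ring | intros; ring]. Qed.

Lemma meas_add phi psi : C0 Om phi -> C0 Om psi -> mu (fun x => phi x + psi x) = mu phi + mu psi.
Proof. intros H1 H2. rewrite (meas_comb phi psi 1); auto; [ring | intros; ring]. Qed.

Definition unit_values : R -> Prop :=
  fun r => exists phi, C0 Om phi /\ (forall x, Rabs (phi x) <= 1) /\ r = mu phi.

Lemma mnorm_some : esup unit_values = Some (mnorm Om mu).
Proof.
  destruct Hmu as [_ [_ [C HC]]].
  destruct (esup_bound unit_values C) as [v [Hv _]].
  - exists (mu (fun _ => 0)), (fun _ => 0). split; [apply C0_zero|]. split; auto.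
    intros; rewrite Rabs_R0; lra.
  - intros r [phi [H1 [H2 ->]]]. specialize (HC phi 1 H1 H2). pose proof (Rle_abs (mu phi)). lra.
  - unfold mnorm. fold unit_values. rewrite Hv. auto.
Qed.

Lemma mnorm_ub phi : C0 Om phi -> (forall x, Rabs (phi x) <= 1) -> mu phi <= mnorm Om mu.
Proof. intros H1 H2. apply (esup_some_ub unit_values); [apply mnorm_some | exists phi; auto]. Qed.

Lemma mnorm_nonneg : 0 <= mnorm Om mu.
Proof. rewrite <- meas_zero. apply mnorm_ub; [apply C0_zero | intros; rewrite Rabs_R0; lra]. Qed.

Lemma meas_bound phi r : C0 Om phi -> (forall x, Rabs (phi x) <= r) -> Rabs (mu phi) <= mnorm Om mu * r.
Proof.
  intros H1 H2. pose proof mnorm_nonneg. destruct (Rle_lt_dec r 0).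
  - assert (Hphi : phi = fun _ => 0).
    { apply functional_extensionality. intros x. specialize (H2 x). pose proof (Rabs_pos (phi x)).
      destruct (Req_dec (phi x) 0); auto. apply Rabs_no_R0 in H3. lra. }
    subst. rewrite meas_zero, Rabs_R0. pose proof (H2 (fun _ => 0)). rewrite Rabs_R0 in H0.
    replace r with 0 by lra. lra.
  - assert (Hb : forall x, Rabs (/ r * phi x) <= 1).
    { intros x. rewrite Rabs_mult, Rabs_inv, (Rabs_right r) by lra.
      apply Rmult_le_reg_l with r; auto.
      rewrite <- Rmult_assoc, Rinv_r, Rmult_1_l, Rmult_1_r by lra. apply H2. }
    assert (Hb' : forall x, Rabs (- / r * phi x) <= 1)
      by (intros x; rewrite Ropp_mult_distr_l_reverse, Rabs_Ropp; auto).
    pose proof (mnorm_ub _ (C0_scal Om phi _ H1) Hb) as Hup.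
    pose proof (mnorm_ub _ (C0_scal Om phi _ H1) Hb') as Hlow.
    rewrite meas_scal in Hup, Hlow by auto.
    assert (Hr : 0 < / r) by (apply Rinv_0_lt_compat; lra).
    apply Rabs_le. split; apply Rmult_le_reg_l with (/ r); auto.
    + replace (/ r * (- (mnorm Om mu * r))) with (- mnorm Om mu) by (field; lra). lra.
    + replace (/ r * (mnorm Om mu * r)) with (mnorm Om mu) by (field; lra). lra.
Qed.

End Functional.

Lemma meas_Astar {d m} (Om : vec d -> Prop) mu (a : Fin.t m -> vec d -> R) q :
  IsMeas Om mu -> (forall i, C0 Om (a i)) -> mu (Astar a q) = dot q (Aop a mu).
Proof.
  intros Hmu. unfold Astar, dot, Aop. revert a q; induction m; intros a q Ha; simpl.
  - apply (meas_zero Om mu Hmu).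
  - rewrite <- (IHm (fun i => a (Fin.FS i)) (fun i => q (Fin.FS i)) (fun i => Ha _)).
    rewrite <- (meas_scal Om mu Hmu _ _ (Ha Fin.F1)).
    apply (meas_add Om mu Hmu); [apply C0_scal; auto|].
    apply (C0_Astar Om (fun i => a (Fin.FS i)) (fun i => q (Fin.FS i))). intros; apply Ha.
Qed.

Lemma supported_mono {d} (Om : vec d -> Prop) mu O1 O2 :
  (forall x, O1 x -> O2 x) -> supported_in Om mu O1 -> supported_in Om mu O2.
Proof.
  intros H Hs eps He. destruct (Hs eps He) as [U [HU [HE Hb]]]. exists U. split; auto. split; auto.
  intros x [Hx Hn]. apply HE. split; auto.
Qed.

Lemma supported_full {d} (Om : vec d -> Prop) mu : IsMeas Om mu -> supported_in Om mu Om.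
Proof.
  intros Hm eps He. exists (fun _ => False). split; [intros x []|]. split; [intros x [Hx Hn]; auto|].
  intros phi H1 H2 H3. replace phi with (fun _ : vec d => 0); [rewrite (meas_zero Om mu Hm); lra|].
  apply functional_extensionality. intros x. symmetry; apply H3; auto.
Qed.

Lemma le_of_small_eps a b M : 0 <= b -> 0 <= M ->
  (forall eps, 0 < eps -> eps < 1 -> a <= b * (1 + eps) + M * eps) -> a <= b.
Proof.
  intros Hb HM H. apply Rnot_lt_le. intros Hl. set (g := a - b).
  set (eps := Rmin (1/2) (g / (2 * (b + M + 1)))).
  assert (He : 0 < eps) by (apply Rmin_pos; [lra | apply Rdiv_lt_0_compat; unfold g; lra]).
  assert (He1 : eps < 1) by (pose proof (Rmin_l (1/2) (g / (2 * (b + M + 1)))); unfold eps; lra).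
  assert (eps * (b + M + 1) <= g / 2).
  { pose proof (Rmin_r (1/2) (g / (2 * (b + M + 1)))) as Hr. fold eps in Hr.
    apply Rle_trans with (g / (2 * (b + M + 1)) * (b + M + 1)); [apply Rmult_le_compat_r; lra|].
    right. field. lra. }
  specialize (H eps He He1). unfold g in *. nra.
Qed.

(** Truncation step for [supported_bound]: clip psi at level 1+eps; the
    clipped part is bounded by the norm, the remainder lives off Om'. *)
Lemma supported_bound_eps {d} (Om : vec d -> Prop) mu O' psi M eps :
  IsMeas Om mu -> supported_in Om mu O' -> C0 Om psi -> (forall x, O' x -> Rabs (psi x) <= 1) ->
  0 < M -> (forall x, Rabs (psi x) <= M) -> 0 < eps -> eps < 1 ->
  mu psi <= mnorm Om mu * (1 + eps) + M * eps.
Proof.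
  intros Hmu Hs Hpsi H1 HMp HM He He1.
  destruct (Hs eps He) as [U [HU [HEU HUb]]]. set (c := 1 + eps).
  set (clip := fun a => Rmax (- c) (Rmin c a)).
  assert (Hclip0 : clip 0 = 0) by (unfold clip, Rmax, Rmin, c; repeat destruct Rle_dec; lra).
  assert (Hclip_lip : forall a b, Rabs (clip a - clip b) <= Rabs (a - b)).
  { intros a b. unfold clip, Rmax, Rmin. pose proof (Rle_abs (a-b)). pose proof (Rle_abs (-(a-b))).
    rewrite Rabs_Ropp in H0. repeat destruct Rle_dec; apply Rabs_le; lra. }
  assert (Hp1 : C0 Om (fun x => clip (psi x))) by (apply C0_comp1; auto).
  assert (Hp2 : C0 Om (fun x => / M * (psi x - clip (psi x)))) by (apply C0_scal, C0_sub; auto).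
  assert (Hb1 : Rabs (mu (fun x => clip (psi x))) <= mnorm Om mu * c).
  { apply meas_bound; auto. intros x. unfold clip, Rmax, Rmin, c. repeat destruct Rle_dec; apply Rabs_le; lra. }
  (* psi and its clipping agree on O', so the scaled remainder vanishes off U *)
  assert (Hb2 : mu (fun x => / M * (psi x - clip (psi x))) <= eps).
  { apply HUb; auto.
    - intros x. rewrite Rabs_mult, Rabs_inv, (Rabs_right M) by lra.
      apply Rmult_le_reg_l with M; auto. rewrite <- Rmult_assoc, Rinv_r, Rmult_1_l, Rmult_1_r by lra.
      pose proof (HM x). pose proof (Rle_abs (psi x)). pose proof (Rle_abs (- psi x)).
      rewrite Rabs_Ropp in H2. unfold clip, Rmax, Rmin, c in *.
      repeat destruct Rle_dec; apply Rabs_le; lra.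
    - intros x Hx. assert (Hpx : psi x = clip (psi x)).
      { destruct (classic (Om x)) as [Ho|Ho].
        - destruct (classic (O' x)) as [Hq|Hq]; [|exfalso; apply Hx, HEU; auto].
          specialize (H1 x Hq). apply Rabs_le_inv in H1. unfold clip, Rmax, Rmin, c; repeat destruct Rle_dec; lra.
        - rewrite (proj1 Hpsi x Ho). auto. }
      rewrite <- Hpx. ring. }
  rewrite (meas_scal Om mu Hmu), (meas_sub Om mu Hmu) in Hb2 by (try apply C0_sub; auto).
  assert (mu psi - mu (fun x => clip (psi x)) <= M * eps).
  { apply Rmult_le_reg_l with (/ M); [apply Rinv_0_lt_compat; auto|].
    replace (/ M * (M * eps)) with eps by (field; lra). auto. }
  pose proof (Rle_abs (mu (fun x => clip (psi x)))). unfold c in *. lra.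
Qed.

Lemma supported_bound {d} (Om : vec d -> Prop) mu O' psi :
  IsMeas Om mu -> supported_in Om mu O' -> C0 Om psi ->
  (forall x, O' x -> Rabs (psi x) <= 1) -> mu psi <= mnorm Om mu.
Proof.
  intros Hmu Hs Hpsi H1. destruct (C0_bounded Om psi Hpsi) as [M0 HM0].
  assert (HM : forall x, Rabs (psi x) <= Rabs M0 + 1)
    by (intros x; pose proof (HM0 x); pose proof (Rle_abs M0); lra).
  pose proof (Rabs_pos M0).
  apply (le_of_small_eps _ _ (Rabs M0 + 1)); [apply mnorm_nonneg; auto | lra|].
  intros eps He He1. apply (supported_bound_eps Om mu O'); auto. lra.
Qed.

(** * A countable dense family in C_0(Omega) *)

Definition rat_of_nat (n : nat) : R :=
  let (a, r) := Cantor.of_nat n in let (b, c) := Cantor.of_nat r in (INR a - INR b) / INR (S c).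

Lemma IZR_nat_diff (z : Z) : exists a b, IZR z = INR a - INR b.
Proof.
  destruct (Z_le_dec 0 z).
  - exists (Z.to_nat z), O. rewrite (INR_IZR_INZ (Z.to_nat z)), Znat.Z2Nat.id by lia. simpl; ring.
  - exists O, (Z.to_nat (- z)). rewrite (INR_IZR_INZ (Z.to_nat (- z))), Znat.Z2Nat.id, opp_IZR by lia.
    simpl; ring.
Qed.

Lemma rat_of_nat_dense r eps : 0 < eps -> exists n, Rabs (rat_of_nat n - r) < eps.
Proof.
  intros He. destruct (inv_small eps He) as [N HN]. specialize (HN N (le_n _)).
  set (D := INR (S N)). assert (HD : 0 < D) by (apply lt_0_INR; lia).
  destruct (archimed (r * D)) as [H1 H2].
  destruct (IZR_nat_diff (up (r * D) - 1)) as [a [b Hab]].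
  exists (Cantor.to_nat (a, Cantor.to_nat (b, N))). unfold rat_of_nat. rewrite !Cantor.cancel_of_to.
  fold D. rewrite <- Hab, minus_IZR.
  assert (Hx : Rabs ((IZR (up (r * D)) - 1) / D - r) <= / D).
  { replace ((IZR (up (r * D)) - 1) / D - r) with ((IZR (up (r * D)) - 1 - r * D) / D) by (field; lra).
    unfold Rdiv. rewrite Rabs_mult, Rabs_inv, (Rabs_right D) by lra.
    replace (/ D) with (1 * / D) at 2 by ring.
    apply Rmult_le_compat_r; [left; apply Rinv_0_lt_compat; auto | apply Rabs_le; lra]. }
  fold D in HN. lra.
Qed.

Fixpoint ratvec_of_nat (d : nat) (n : nat) : vec d :=
  match d with
  | O => fun _ => 0
  | S d' => fun i => Fin.caseS' i (fun _ => R) (rat_of_nat (fst (Cantor.of_nat n)))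
                       (fun j => ratvec_of_nat d' (snd (Cantor.of_nat n)) j)
  end.

Lemma ratvec_dense_coords d (p : vec d) eps : 0 < eps ->
  exists n, forall i, Rabs (ratvec_of_nat d n i - p i) < eps.
Proof.
  revert p; induction d; intros p He; [exists O; intros i; inversion i|].
  destruct (IHd (fun j => p (Fin.FS j)) He) as [n2 Hn2].
  destruct (rat_of_nat_dense (p Fin.F1) eps He) as [n1 Hn1].
  exists (Cantor.to_nat (n1, n2)). intros i.
  set (n := Cantor.to_nat (n1, n2)).
  refine (Fin.caseS' i (fun i => Rabs (ratvec_of_nat (S d) n i - p i) < eps) _ _).
  - change (ratvec_of_nat (S d) n Fin.F1) with (rat_of_nat (fst (Cantor.of_nat n))).
    unfold n. rewrite Cantor.cancel_of_to. exact Hn1.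
  - intros j. change (ratvec_of_nat (S d) n (Fin.FS j)) with (ratvec_of_nat d (snd (Cantor.of_nat n)) j).
    unfold n. rewrite Cantor.cancel_of_to. apply Hn2.
Qed.

Lemma ratvec_dense d (p : vec d) eps : 0 < eps -> exists n, l1norm (vsub (ratvec_of_nat d n) p) < eps.
Proof.
  intros He. pose proof (pos_INR d).
  destruct (ratvec_dense_coords d p (eps / (INR d + 1))) as [n Hn]; [apply Rdiv_lt_0_compat; lra|].
  exists n. apply l1_lt_of_coords; auto. intros; left; apply Hn.
Qed.

Fixpoint list_of_code (len code : nat) : list nat :=
  match len with
  | O => nil
  | S l => cons (fst (Cantor.of_nat code)) (list_of_code l (snd (Cantor.of_nat code)))
  end.

Definition list_of_nat (k : nat) : list nat := let (len, code) := Cantor.of_nat k in list_of_code len code.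

Lemma list_of_nat_surj (L : list nat) : exists k, list_of_nat k = L.
Proof.
  assert (exists len code, list_of_code len code = L) as [len [code H]].
  { induction L as [|a L [len [code IH]]]; [exists O, O; auto|].
    exists (S len), (Cantor.to_nat (a, code)).
    change (list_of_code (S len) (Cantor.to_nat (a, code))) with
      (cons (fst (Cantor.of_nat (Cantor.to_nat (a, code))))
            (list_of_code len (snd (Cantor.of_nat (Cantor.to_nat (a, code)))))).
    rewrite Cantor.cancel_of_to. simpl. rewrite IH. auto. }
  exists (Cantor.to_nat (len, code)). unfold list_of_nat. rewrite Cantor.cancel_of_to. auto.
Qed.

Definition profile (del t : R) : R := Rmin 1 (Rmax 0 (2 - 2 * t / del)).

Lemma profile_01 del t : 0 <= profile del t <= 1.
Proof. unfold profile, Rmin, Rmax. repeat destruct Rle_dec; lra. Qed.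

Lemma profile_one del t : 0 < del -> t <= del / 2 -> profile del t = 1.
Proof.
  intros H1 H2. unfold profile. assert (1 <= 2 - 2 * t / del).
  { apply Rmult_le_reg_r with del; auto.
    replace ((2 - 2 * t / del) * del) with (2 * del - 2 * t) by (field; lra). lra. }
  unfold Rmin, Rmax. repeat destruct Rle_dec; lra.
Qed.

Lemma profile_zero del t : 0 < del -> del <= t -> profile del t = 0.
Proof.
  intros H1 H2. unfold profile. assert (2 - 2 * t / del <= 0).
  { apply Rmult_le_reg_r with del; auto.
    replace ((2 - 2 * t / del) * del) with (2 * del - 2 * t) by (field; lra). lra. }
  unfold Rmin, Rmax. repeat destruct Rle_dec; lra.
Qed.

Lemma profile_lip del t1 t2 : 0 < del -> Rabs (profile del t1 - profile del t2) <= 2 / del * Rabs (t1 - t2).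
Proof.
  intros H. unfold profile.
  assert (Hm : forall a b, Rabs (Rmin 1 (Rmax 0 a) - Rmin 1 (Rmax 0 b)) <= Rabs (a - b)).
  { intros a b. unfold Rmin, Rmax. pose proof (Rle_abs (a-b)). pose proof (Rle_abs (-(a-b))).
    rewrite Rabs_Ropp in H1. repeat destruct Rle_dec; apply Rabs_le; lra. }
  eapply Rle_trans; [apply Hm|].
  replace (2 - 2 * t1 / del - (2 - 2 * t2 / del)) with (2 / del * (t2 - t1)) by (field; lra).
  rewrite Rabs_mult, (Rabs_right (2 / del)), Rabs_minus_sym; [lra|]. left; apply Rdiv_lt_0_compat; lra.
Qed.

Section Tents.
Context {d : nat} (Om : vec d -> Prop).

Definition tent (c : vec d) (del h : R) (x : vec d) : R := h * profile del (l1norm (vsub x c)).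

Definition tent_fits (c : vec d) (del : R) : Prop :=
  0 < del /\ forall y, l1norm (vsub y c) <= del -> Om y.

Definition tent_in (c : vec d) (del h : R) : vec d -> R :=
  if excluded_middle_informative (tent_fits c del) then tent c del h else fun _ => 0.

Lemma tent_C0 c del h : tent_fits c del -> C0 Om (tent c del h).
Proof.
  intros [Hd Hv]. split; [|split].
  - intros x Hx. unfold tent. rewrite profile_zero; auto; [ring|].
    apply Rnot_lt_le. intros Hl. apply Hx, Hv. lra.
  - intros x Hx eps He. pose proof (Rabs_pos h). pose proof (pos_INR d).
    assert (Hdd : 0 < 2 / del) by (apply Rdiv_lt_0_compat; lra).
    set (D := (Rabs h + 1) * (2 / del) * (INR d + 1)).
    assert (HD : 0 < D) by (unfold D; repeat apply Rmult_lt_0_compat; lra).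
    exists (eps / D). split; [apply Rdiv_lt_0_compat; auto|]. intros y Hy Hxy.
    unfold tent. rewrite <- Rmult_minus_distr_l, Rabs_mult.
    pose proof (profile_lip del (l1norm (vsub y c)) (l1norm (vsub x c)) Hd) as Hp.
    pose proof (l1_sub_lip y x c) as Hl. pose proof (l1_le_dist y x) as Hld. rewrite dist_sym in Hld.
    assert (Hf : Rabs (profile del (l1norm (vsub y c)) - profile del (l1norm (vsub x c)))
                 <= 2 / del * (INR d + 1) * dist x y).
    { pose proof (vnorm_nonneg (vsub x y)). unfold dist in *.
      eapply Rle_trans; [apply Hp|]. rewrite Rmult_assoc. apply Rmult_le_compat_l; lra. }
    apply Rle_lt_trans with (D * dist x y).
    + unfold D. pose proof (Rabs_pos (profile del (l1norm (vsub y c)) - profile del (l1norm (vsub x c)))).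
      replace ((Rabs h + 1) * (2 / del) * (INR d + 1) * dist x y)
        with ((Rabs h + 1) * (2 / del * (INR d + 1) * dist x y)) by ring.
      apply Rmult_le_compat; lra.
    + apply Rmult_lt_reg_l with (/ D); [apply Rinv_0_lt_compat; auto|].
      rewrite <- Rmult_assoc, Rinv_l, Rmult_1_l by lra. rewrite Rmult_comm. exact Hxy.
  - intros eps He. exists (fun y => l1norm (vsub y c) <= del).
    split; [apply l1ball_compact|]. split; auto.
    intros x _ Hn. unfold tent. rewrite profile_zero, Rmult_0_r, Rabs_R0; auto. lra.
Qed.

Lemma tent_in_C0 c del h : C0 Om (tent_in c del h).
Proof. unfold tent_in. destruct excluded_middle_informative; [apply tent_C0; auto | apply C0_zero]. Qed.

Lemma tent_in_fits c del h : tent_fits c del -> tent_in c del h = tent c del h.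
Proof. intros H. unfold tent_in. destruct excluded_middle_informative; tauto. Qed.

Definition tent_data (n : nat) : vec d * R * R :=
  let (a, r) := Cantor.of_nat n in
  let (N, b) := Cantor.of_nat r in (ratvec_of_nat d a, / INR (S N), rat_of_nat b).

Definition center n := fst (fst (tent_data n)).
Definition radius n := snd (fst (tent_data n)).
Definition height n := snd (tent_data n).

Definition coded_tent (n : nat) : vec d -> R := tent_in (center n) (radius n) (height n).

Lemma tent_data_code a N b :
  tent_data (Cantor.to_nat (a, Cantor.to_nat (N, b))) = (ratvec_of_nat d a, / INR (S N), rat_of_nat b).
Proof. unfold tent_data. rewrite !Cantor.cancel_of_to. reflexivity. Qed.

Fixpoint max_tents (L : list nat) (x : vec d) : R :=
  match L with nil => 0 | cons n L' => Rmax (coded_tent n x) (max_tents L' x) end.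

(** The countable family: differences of maxima of finitely many coded tents. *)
Definition dense_fn (j : nat) (x : vec d) : R :=
  let (j1, j2) := Cantor.of_nat j in max_tents (list_of_nat j1) x - max_tents (list_of_nat j2) x.

Lemma max_tents_C0 L : C0 Om (max_tents L).
Proof. induction L; simpl; [apply C0_zero | apply C0_max; auto; apply tent_in_C0]. Qed.

Lemma dense_fn_C0 j : C0 Om (dense_fn j).
Proof. unfold dense_fn. destruct (Cantor.of_nat j). apply C0_sub; apply max_tents_C0. Qed.

Lemma max_tents_ge0 L x : 0 <= max_tents L x.
Proof. induction L; simpl; [lra|]. eapply Rle_trans; [|apply Rmax_r]. auto. Qed.

Lemma max_tents_ge_in L n x : In n L -> coded_tent n x <= max_tents L x.
Proof.
  induction L; simpl; [intros []|]. intros [<-|H]; [apply Rmax_l|].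
  eapply Rle_trans; [|apply Rmax_r]. auto.
Qed.

Definition tent_below (g : vec d -> R) (n : nat) : Prop :=
  tent_fits (center n) (radius n) /\
  forall y, l1norm (vsub y (center n)) < radius n -> height n < g y.

Lemma max_tents_le g L : (forall x, 0 <= g x) -> (forall n, In n L -> tent_below g n) ->
  forall x, max_tents L x <= g x.
Proof.
  intros Hpos HL x. induction L as [|n L IH]; simpl; [apply Hpos|]. apply Rmax_lub.
  - destruct (HL n (or_introl eq_refl)) as [Hv Hh]. unfold coded_tent.
    rewrite tent_in_fits by auto. unfold tent.
    destruct (Rlt_dec (l1norm (vsub x (center n))) (radius n)) as [Hl|Hl].
    + specialize (Hh x Hl). pose proof (profile_01 (radius n) (l1norm (vsub x (center n)))).
      pose proof (Hpos x). destruct (Rle_dec 0 (height n)); nra.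
    + rewrite profile_zero, Rmult_0_r; [apply Hpos | apply Hv | lra].
  - apply IH. intros m Hm. apply HL; right; auto.
Qed.

Lemma tent_near g K p eps rho du N : C0 Om g -> K p -> 0 < eps ->
  (forall x y, K x -> dist x y < rho -> Om y) ->
  (forall x y, K x -> Om y -> dist x y < du -> Rabs (g y - g x) < eps) ->
  / INR (S N) <= Rmin rho du / 2 ->
  exists n, tent_below g n /\ radius n = / INR (S N) /\
    l1norm (vsub p (center n)) < / INR (S N) / 4 /\ g p - 2 * eps < height n.
Proof.
  intros Hg Kp He Hm Hu HN. set (del := / INR (S N)) in *.
  assert (Hdel : 0 < del) by (apply Rinv_0_lt_compat, lt_0_INR; lia).
  pose proof (Rmin_l rho du). pose proof (Rmin_r rho du).
  destruct (ratvec_dense d p (del / 4)) as [a Ha]; [lra|].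
  destruct (rat_of_nat_dense (g p - 3 * eps / 2) (eps / 2)) as [b Hb]; [lra|].
  exists (Cantor.to_nat (a, Cantor.to_nat (N, b))).
  unfold tent_below, center, radius, height. rewrite tent_data_code. cbn [fst snd]. fold del.
  rewrite l1_sub_sym in Ha. apply Rabs_def2 in Hb.
  assert (Hnear : forall y, l1norm (vsub y (ratvec_of_nat d a)) <= del -> dist p y < rho /\ dist p y < du).
  { intros y Hy. pose proof (l1_sub_triang y (ratvec_of_nat d a) p).
    rewrite (l1_sub_sym y p), (l1_sub_sym (ratvec_of_nat d a) p) in H1.
    pose proof (dist_le_l1 p y). lra. }
  split; [split; [split|] | split; [reflexivity | split; [exact Ha | lra]]]; auto.
  - intros y Hy. apply (Hm p y Kp), Hnear; auto.
  - intros y Hy. destruct (Hnear y ltac:(lra)).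
    pose proof (Hu p y Kp (Hm p y Kp H1) H2). apply Rabs_def2 in H3. lra.
Qed.

Hypothesis HO : is_open Om.

(** A nonnegative g in C_0 is uniformly approximated within 3 eps by a
    maximum of finitely many coded tents: below g everywhere, and within
    3 eps of g on the compact set outside of which g < eps. *)
Lemma approx_nonneg g : C0 Om g -> (forall x, 0 <= g x) -> forall eps, 0 < eps ->
  exists L, forall x, Rabs (g x - max_tents L x) <= 3 * eps.
Proof.
  intros Hg Hpos eps He. pose proof Hg as [Hg0 [_ Hginf]].
  destruct (Hginf eps He) as [K [HK [HKO HKb]]].
  destruct (compact_margin Om K HO HK HKO) as [rho [Hrho Hm]].
  destruct (C0_unif Om g K Hg HK HKO eps He) as [du [Hdu Hu]].
  destruct (inv_small (Rmin rho du / 2)) as [N HN]; [pose proof (Rmin_pos _ _ Hrho Hdu); lra|].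
  specialize (HN N (le_n _)). set (del := / INR (S N)) in *.
  assert (Hdel : 0 < del) by (apply Rinv_0_lt_compat, lt_0_INR; lia).
  destruct (totally_bounded K (del / 4) HK ltac:(lra)) as [P [HP1 HP2]].
  (* one tent for each point of a del/4-net of K *)
  assert (HL : exists L, (forall n, In n L -> tent_below g n) /\
             forall p, In p P -> exists n, In n L /\ radius n = del /\
               l1norm (vsub p (center n)) < del / 4 /\ g p - 2 * eps < height n).
  { clear HP2. induction P as [|p P IH]; [exists nil; split; [intros n [] | intros p []]|].
    destruct IH as [L [HL1 HL2]]; [intros q Hq; apply HP1; right; auto|].
    destruct (tent_near g K p eps rho du N Hg (HP1 p (or_introl eq_refl)) He Hm Hu (Rlt_le _ _ HN))
      as [n [Gn Ln]].
    exists (cons n L). split; [intros k [<-|Hk]; auto|].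
    intros q [<-|Hq]; [exists n; split; [left|]; auto|].
    destruct (HL2 q Hq) as [k [Hk1 Hk2]]. exists k; split; [right|]; auto. }
  destruct HL as [L [HL1 HL2]]. exists L. intros x.
  pose proof (max_tents_le g L Hpos HL1 x) as Hup.
  assert (Hlow : g x - 3 * eps <= max_tents L x).
  { destruct (classic (K x)) as [Kx|nKx].
    - destruct (HP2 x Kx) as [p [Hp Hxp]]. destruct (HL2 p Hp) as [n [Hn [Hr [Hpc Hh]]]].
      eapply Rle_trans; [|apply (max_tents_ge_in L n x Hn)].
      destruct (HL1 n Hn) as [Hfit _]. unfold coded_tent. rewrite tent_in_fits by exact Hfit.
      unfold tent. rewrite profile_one; [| apply Hfit |].
      2: { pose proof (l1_sub_triang x p (center n)). rewrite Hr. lra. }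
      assert (Hdp : dist p x < du).
      { eapply Rle_lt_trans; [apply dist_le_l1|]. rewrite l1_sub_sym. pose proof (Rmin_r rho du). lra. }
      pose proof (Hu p x (HP1 p Hp) (HKO x Kx) Hdp) as Hgx. apply Rabs_def2 in Hgx. lra.
    - pose proof (max_tents_ge0 L x). destruct (classic (Om x)) as [Ox|nOx].
      + specialize (HKb x Ox nKx). pose proof (Rle_abs (g x)). lra.
      + rewrite Hg0 by auto. lra. }
  apply Rabs_le. lra.
Qed.

Lemma dense_fn_dense phi : C0 Om phi -> forall eps, 0 < eps ->
  exists j, forall x, Rabs (phi x - dense_fn j x) <= eps.
Proof.
  intros Hphi eps He.
  assert (Hpart : forall s, Rabs s = 1 -> C0 Om (fun x => Rmax (s * phi x) 0)).
  { intros s Hs. apply (C0_comp1 Om (fun a => Rmax (s * a) 0)); auto.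
    - rewrite Rmult_0_r. unfold Rmax; destruct Rle_dec; lra.
    - intros a b. pose proof (Rmax_lip (s * a) 0 (s * b) 0). rewrite Rminus_diag, Rabs_R0 in H.
      replace (s * a - s * b) with (s * (a - b)) in H by ring. rewrite Rabs_mult, Hs in H. lra. }
  destruct (approx_nonneg _ (Hpart 1 Rabs_R1) (fun x => Rmax_r _ _) (eps / 6)) as [L1 H1]; [lra|].
  destruct (approx_nonneg _ (Hpart (-1) ltac:(rewrite Rabs_left by lra; lra)) (fun x => Rmax_r _ _) (eps / 6))
    as [L2 H2]; [lra|].
  destruct (list_of_nat_surj L1) as [k1 Hk1]. destruct (list_of_nat_surj L2) as [k2 Hk2].
  exists (Cantor.to_nat (k1, k2)). intros x. unfold dense_fn. rewrite Cantor.cancel_of_to, Hk1, Hk2.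
  specialize (H1 x). specialize (H2 x).
  replace (phi x - (max_tents L1 x - max_tents L2 x)) with
    ((Rmax (1 * phi x) 0 - max_tents L1 x) - (Rmax (-1 * phi x) 0 - max_tents L2 x))
    by (unfold Rmax; repeat destruct Rle_dec; lra).
  eapply Rle_trans; [apply Rabs_triang|]. rewrite Rabs_Ropp. lra.
Qed.

End Tents.

(** * Weak-* sequential compactness of bounded sets of functionals *)

Section WeakStar.
Context {d : nat} (Om : vec d -> Prop) (HO : is_open Om).

Lemma cv_from_dense (nus : nat -> meas d) B :
  (forall k, IsMeas Om (nus k)) -> (forall k, mnorm Om (nus k) <= B) ->
  (forall j, exists l, Un_cv (fun k => nus k (dense_fn Om j)) l) ->
  forall phi, C0 Om phi -> exists l, Un_cv (fun k => nus k phi) l.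
Proof.
  intros Hnu HB Hcv phi Hphi. pose proof (mnorm_nonneg Om (nus O) (Hnu O)).
  destruct (R_complete (fun k => nus k phi)) as [l Hl]; [|exists l; auto].
  intros eps He. set (e := eps / (3 * (B + 1))).
  assert (Hep : 0 < e) by (unfold e; apply Rdiv_lt_0_compat; pose proof (HB O); lra).
  destruct (dense_fn_dense Om HO phi Hphi e Hep) as [j Hj].
  destruct (Hcv j) as [lj Hlj].
  destruct (CV_Cauchy _ (exist _ lj Hlj) (eps / 3)) as [N HN]; [lra|].
  exists N. intros n m Hn Hm. specialize (HN n m Hn Hm).
  assert (Hclose : forall k, Rabs (nus k phi - nus k (dense_fn Om j)) <= B * e).
  { intros k. rewrite <- (meas_sub Om _ (Hnu k)); auto; [|apply dense_fn_C0].
    eapply Rle_trans; [apply (meas_bound Om _ (Hnu k)); [apply C0_sub; auto; apply dense_fn_C0 | apply Hj]|].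
    apply Rmult_le_compat_r; [lra | auto]. }
  assert (B * e < eps / 3).
  { unfold e. apply Rmult_lt_reg_r with (3 * (B + 1)); [pose proof (HB O); lra|].
    replace (B * (eps / (3 * (B + 1))) * (3 * (B + 1))) with (B * eps) by (field; pose proof (HB O); lra).
    pose proof (HB O). nra. }
  unfold Rdist in *. pose proof (Hclose n). pose proof (Hclose m).
  set (a1 := nus n phi - nus n (dense_fn Om j)) in *. set (a3 := nus m phi - nus m (dense_fn Om j)) in *.
  set (a2 := nus n (dense_fn Om j) - nus m (dense_fn Om j)) in *.
  replace (nus n phi - nus m phi) with (a1 + a2 - a3) by (unfold a1, a2, a3; ring).
  pose proof (Rabs_triang (a1 + a2) (- a3)). pose proof (Rabs_triang a1 a2). rewrite Rabs_Ropp in H3.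
  unfold Rminus. lra.
Qed.

Lemma pointwise_limit_meas (nus : nat -> meas d) B (lim : meas d) :
  (forall k, IsMeas Om (nus k)) -> (forall k, mnorm Om (nus k) <= B) ->
  (forall phi, ~ C0 Om phi -> lim phi = 0) ->
  (forall phi, C0 Om phi -> Un_cv (fun k => nus k phi) (lim phi)) -> IsMeas Om lim.
Proof.
  intros Hnu HB H0 Hlim. split; [auto|split].
  - intros phi psi c H1 H2. apply (UL_sequence (fun k => nus k (fun x => phi x + c * psi x))).
    + apply Hlim, C0_lin; auto.
    + apply (cv_ext (fun k => nus k phi + (fun _ => c) k * nus k psi)).
      * intros k. simpl. rewrite (meas_lin Om _ (Hnu k)); auto.
      * apply CV_plus; [apply Hlim; auto|]. apply CV_mult; [apply cv_const; auto | apply Hlim; auto].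
  - exists B. intros phi r H1 H2. apply (cv_abs_bound (fun k => nus k phi)); [apply Hlim; auto|].
    intros k. eapply Rle_trans; [apply (meas_bound Om _ (Hnu k)); eauto|].
    apply Rmult_le_compat_r; auto. eapply Rle_trans; [apply Rabs_pos | apply (H2 (fun _ => 0))].
Qed.

Theorem weak_star_compact (mus : nat -> meas d) B :
  (forall k, IsMeas Om (mus k)) -> (forall k, mnorm Om (mus k) <= B) ->
  exists s mu, strictly_increasing s /\ IsMeas Om mu /\ weakstar_cv Om (fun k => mus (s k)) mu.
Proof.
  intros Hmu HB.
  destruct (choose_fun (fun j M => forall x, Rabs (dense_fn Om j x) <= M)) as [M HM].
  { intros j. apply (C0_bounded Om), dense_fn_C0. }
  destruct (diagonal_subseq (fun j k => mus k (dense_fn Om j)) (fun j => B * M j)) as [s [Hs Hcv]].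
  { intros j k. eapply Rle_trans; [apply (meas_bound Om (mus k) (Hmu k)); [apply dense_fn_C0 | apply HM]|].
    apply Rmult_le_compat_r; auto. eapply Rle_trans; [apply Rabs_pos | apply (HM j (fun _ => 0))]. }
  assert (Hconv : forall phi, C0 Om phi -> exists l, Un_cv (fun k => mus (s k) phi) l)
    by (apply (cv_from_dense (fun k => mus (s k)) B); auto).
  set (lim := fun phi => match excluded_middle_informative (C0 Om phi) with
               | left H => proj1_sig (constructive_indefinite_description _ (Hconv phi H))
               | right _ => 0 end).
  assert (Hlim : forall phi, C0 Om phi -> Un_cv (fun k => mus (s k) phi) (lim phi)).
  { intros phi H. unfold lim. destruct excluded_middle_informative; [|contradiction].
    exact (proj2_sig (constructive_indefinite_description _ (Hconv phi c))). }
  exists s, lim. split; [auto|split; [|exact Hlim]].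
  apply (pointwise_limit_meas (fun k => mus (s k)) B); auto.
  intros phi H. unfold lim. destruct excluded_middle_informative; [contradiction | auto].
Qed.

End WeakStar.

Lemma fstar_ub {m} (f : vec m -> ereal) q F y w :
  fstar f q = Some F -> f y = Some w -> dot q y - w <= F.
Proof. intros H1 H2. apply (esup_some_ub _ _ _ H1). exists y, w; auto. Qed.

Lemma fstar_le {m} (f : vec m -> ereal) q b : proper f ->
  (forall y w, f y = Some w -> dot q y - w <= b) -> exists F, fstar f q = Some F /\ F <= b.
Proof.
  intros [y [v Hy]] H. apply esup_bound; [exists (dot q y - v), y, v; auto|].
  intros r [y' [w [Hw ->]]]. apply H; auto.
Qed.

Lemma Jfun_some {d m} (Om : vec d -> Prop) a (f : vec m -> ereal) mu v :
  Jfun Om a f mu = Some v -> exists w, f (Aop a mu) = Some w /\ v = mnorm Om mu + w.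
Proof. unfold Jfun. destruct (f (Aop a mu)) as [w|]; intros H; inversion H. eauto. Qed.

Lemma Jfun_of {d m} (Om : vec d -> Prop) a (f : vec m -> ereal) mu w :
  f (Aop a mu) = Some w -> Jfun Om a f mu = Some (mnorm Om mu + w).
Proof. unfold Jfun. intros ->. auto. Qed.

Lemma mnorm_weakstar_lsc {d} (Om : vec d -> Prop) (nus : nat -> meas d) mu :
  (forall k, IsMeas Om (nus k)) -> IsMeas Om mu -> weakstar_cv Om nus mu ->
  forall eps, 0 < eps -> exists N, forall k, (N <= k)%nat -> mnorm Om mu - eps < mnorm Om (nus k).
Proof.
  intros Hnu Hmu Hcv eps He.
  destruct (esup_approx _ _ (eps / 2) (mnorm_some Om mu Hmu)) as [r [[phi [Hphi [Hb ->]]] Hr]]; [lra|].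
  destruct (Hcv phi Hphi (eps / 2)) as [N HN]; [lra|]. exists N. intros k Hk.
  specialize (HN k Hk). unfold Rdist in HN. pose proof (Rle_abs (- (nus k phi - mu phi))).
  rewrite Rabs_Ropp in H. pose proof (mnorm_ub Om (nus k) (Hnu k) phi Hphi Hb). lra.
Qed.

Lemma lsc_limit {m} (f : vec m -> ereal) (ys : nat -> vec m) y c : lsc f -> vec_cv ys y ->
  (forall eps, 0 < eps -> exists N, forall k, (N <= k)%nat -> ele (f (ys k)) (Some (c + eps))) ->
  ele (f y) (Some c).
Proof.
  intros Hf Hy H. apply NNPP; intros Hn.
  assert (exists c', c < c' /\ ~ ele (f y) (Some c')) as [c' [Hc' Hnc']].
  { destruct (f y) as [F|] eqn:E; simpl in *.
    - exists ((F + c) / 2). split; lra.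
    - exists (c + 1). split; [lra | auto]. }
  destruct (Hf _ _ Hnc') as [del [Hdel Hdl]].
  destruct (vec_cv_dcv _ _ Hy del Hdel) as [N1 HN1].
  destruct (H (c' - c)) as [N2 HN2]; [lra|].
  apply (Hdl (ys (max N1 N2))); [apply HN1; lia|].
  replace c' with (c + (c' - c)) by ring. apply HN2; lia.
Qed.

Lemma vec_seq_bounded {m} (qs : nat -> vec m) (Up Lo : Fin.t m -> R) :
  (forall k i, qs k i <= Up i) -> (forall k i, - qs k i <= Lo i) ->
  exists Q, forall k i, Rabs (qs k i) <= Q.
Proof.
  intros H1 H2. exists (fsum m (fun i => Rabs (Up i) + Rabs (Lo i))). intros k i.
  eapply Rle_trans; [|apply (fsum_single m (fun i => Rabs (Up i) + Rabs (Lo i)) i)].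
  - pose proof (H1 k i). pose proof (H2 k i). pose proof (Rle_abs (Up i)). pose proof (Rle_abs (Lo i)).
    pose proof (Rabs_pos (Up i)). pose proof (Rabs_pos (Lo i)). apply Rabs_le; lra.
  - intros j; pose proof (Rabs_pos (Up j)); pose proof (Rabs_pos (Lo j)); lra.
Qed.

Definition adist {m} (M : Fin.t m -> R) (q q' : vec m) : R := fsum m (fun i => Rabs (q i - q' i) * M i).

Section DualDistance.
Context {d m : nat} (a : Fin.t m -> vec d -> R) (M : Fin.t m -> R).
Hypothesis HM : forall i x, Rabs (a i x) <= M i.

Lemma Astar_adist q q' x : Rabs (Astar a q x - Astar a q' x) <= adist M q q'.
Proof.
  unfold Astar, adist. rewrite <- (Rmult_1_l (fsum m (fun i => q' i * a i x))), <- fsum_scal.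
  replace (fsum m (fun i => q i * a i x) - fsum m (fun i => 1 * (q' i * a i x))) with
    (fsum m (fun i => q i * a i x) + (-1) * fsum m (fun i => 1 * (q' i * a i x))) by ring.
  rewrite <- fsum_scal, <- fsum_plus. eapply Rle_trans; [apply fsum_abs|]. apply fsum_le. intros i.
  replace (q i * a i x + -1 * (1 * (q' i * a i x))) with ((q i - q' i) * a i x) by ring.
  rewrite Rabs_mult. apply Rmult_le_compat_l; [apply Rabs_pos | apply HM].
Qed.

Lemma adist_triang q q' r : adist M q q' <= adist M q r + adist M q' r.
Proof.
  unfold adist. rewrite <- fsum_plus. apply fsum_le. intros i.
  assert (0 <= M i) by (eapply Rle_trans; [apply Rabs_pos | apply (HM i (fun _ => 0))]).
  pose proof (Rabs_triang (q i - r i) (- (q' i - r i))). rewrite Rabs_Ropp in H0.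
  replace (q i - r i + - (q' i - r i)) with (q i - q' i) in H0 by ring. nra.
Qed.

Lemma adist_cv (qq : nat -> vec m) ql : vec_cv qq ql -> Un_cv (fun k => adist M (qq k) ql) 0.
Proof.
  intros H. unfold adist. replace 0 with (fsum m (fun i => 0 * M i))
    by (rewrite (fsum_ext m _ (fun _ => 0)), fsum_const by (intros; ring); ring).
  apply (fsum_cv m (fun k i => Rabs (qq k i - ql i) * M i)). intros i.
  apply CV_mult; [|apply cv_const; auto].
  intros eps He. destruct (H i eps He) as [N HN]. exists N. intros n Hn. specialize (HN n Hn).
  unfold Rdist in *. rewrite Rminus_0_r, Rabs_Rabsolu. auto.
Qed.
End DualDistance.

(** * Analysis of the exchange algorithm

    Throughout, v k is the common optimal value J(mu_k) = -f^*(q_k) of the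
    k-th discretized problem and vs = J(mu_opt) = -f^*(q_opt) = inf (P). *)

Section Algorithm.
Context (d m : nat) (Om : vec d -> Prop) (HOm_open : is_open Om)
  (a : Fin.t m -> vec d -> R) (Ha : forall i, C0 Om (a i))
  (f : vec m -> ereal) (Hf_proper : proper f) (Hf_lsc : lsc f) (Hf_bdd : bounded_below f)
  (Oms : nat -> vec d -> Prop) (mus : nat -> meas d) (qs : nat -> vec m)
  (Hmus : forall k, solP Om a f (Oms k) (mus k))
  (Hqs : forall k, solD a f (Oms k) (qs k))
  (Hstep : forall k x, Oms (S k) x <-> (Oms k x \/ Xset Om a (qs k) x))
  (Hyp : H1 f \/ H2 Om a (Oms O))
  (mu_opt : meas d) (q_opt : vec m)
  (Hmu_opt : solP Om a f Om mu_opt) (Hq_opt : solD a f Om q_opt)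
  (v : nat -> R) (Hv : forall k, Jfun Om a f (mus k) = Some (v k) /\ fstar f (qs k) = Some (- v k))
  (vs : R) (Hvs : Jfun Om a f mu_opt = Some vs /\ fstar f q_opt = Some (- vs)).

Lemma Oms_mono k n x : (k <= n)%nat -> Oms k x -> Oms n x.
Proof. induction 1; auto. intros Hx. apply Hstep. left; auto. Qed.

Lemma values_nonincreasing k n : (k <= n)%nat -> v n <= v k.
Proof.
  induction 1 as [|n _ IH]; [lra|]. apply Rle_trans with (v n); auto.
  destruct (Hmus (S n)) as [_ [_ Hopt]]. destruct (Hmus n) as [Hm [Hs _]].
  specialize (Hopt (mus n) Hm). rewrite (proj1 (Hv n)), (proj1 (Hv (S n))) in Hopt. apply Hopt.
  apply (supported_mono Om (mus n) (Oms n)); auto. intros x; apply Oms_mono; lia.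
Qed.

Lemma values_ge_opt k : vs <= v k.
Proof.
  destruct Hmu_opt as [_ [_ Hopt]]. destruct (Hmus k) as [Hm _].
  specialize (Hopt (mus k) Hm (supported_full Om _ Hm)).
  rewrite (proj1 (Hv k)), (proj1 Hvs) in Hopt. apply Hopt.
Qed.

(** ||mu_k|| <= J(mu_k) - inf f <= v_0 - inf f. *)
Lemma mnorm_bounded : exists B, forall k, mnorm Om (mus k) <= B.
Proof.
  destruct Hf_bdd as [b Hb]. exists (v O - b). intros k.
  destruct (Jfun_some Om a f (mus k) (v k) (proj1 (Hv k))) as [w [Hw Hvw]].
  pose proof (Hb _ _ Hw). pose proof (values_nonincreasing O k (Nat.le_0_l k)). lra.
Qed.

(** Fenchel-Young for the iterates: <q_k, y> - f(y) <= f^*(q_k) <= -vs. *)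
Lemma fenchel_iterate k y w : f y = Some w -> dot (qs k) y - w <= - vs.
Proof.
  intros Hw. pose proof (fstar_ub f (qs k) _ y w (proj2 (Hv k)) Hw). pose proof (values_ge_opt k). lra.
Qed.

(** Under (H1) f is finite at ±e_i (Fenchel-Young); under (H2), testing
    A^* q_k against a measure on Omega_0 with moments y bounds <q_k, y>. *)
Lemma dual_bounded : exists Q, forall k i, Rabs (qs k i) <= Q.
Proof.
  destruct Hyp as [[fr [g [L [HL [Hfr _]]]]] | Hsurj].
  - apply (vec_seq_bounded qs (fun i => fr (unitvec i) - vs) (fun i => fr (vscale (-1) (unitvec i)) - vs)).
    + intros k i. pose proof (fenchel_iterate k _ _ (Hfr (unitvec i))). rewrite dot_unitvec in H. lra.
    + intros k i. pose proof (fenchel_iterate k _ _ (Hfr (vscale (-1) (unitvec i)))).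
      rewrite dot_neg_unitvec in H. lra.
  - destruct (choose_fun _ Hsurj) as [nu Hnu].
    assert (Hb : forall k y, dot (qs k) y <= mnorm Om (nu y)).
    { intros k y. destruct (Hnu y) as [Hm [Hs HA]].
      replace y with (Aop a (nu y)) at 1 by (apply functional_extensionality; auto).
      rewrite <- (meas_Astar Om (nu y) a (qs k) Hm Ha).
      apply (supported_bound Om (nu y) (Oms O)); auto; [apply C0_Astar; auto|].
      intros x Hx. apply (proj1 (Hqs k)). apply (Oms_mono O k); auto; lia. }
    apply (vec_seq_bounded qs (fun i => mnorm Om (nu (unitvec i)))
                              (fun i => mnorm Om (nu (vscale (-1) (unitvec i))))).
    + intros k i. rewrite <- dot_unitvec. apply Hb.
    + intros k i. rewrite <- dot_neg_unitvec. apply Hb.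
Qed.

Lemma exchange_adds_max k x0 : Om x0 -> 1 < Rabs (Astar a (qs k) x0) ->
  exists x, Oms (S k) x /\ Rabs (Astar a (qs k) x0) <= Rabs (Astar a (qs k) x).
Proof.
  intros Hx0 Hgt.
  destruct (C0_abs_max Om (Astar a (qs k)) x0 (C0_Astar Om a (qs k) Ha) Hx0) as [x [Hx Hmax]]; [lra|].
  exists x. split; [|apply Hmax]. apply Hstep. right.
  split; auto. split; [pose proof (Hmax x0); lra|].
  exists 1. split; [lra|]. intros y _ _. apply Hmax.
Qed.

Lemma limit_dual_feasible (s : nat -> nat) ql :
  strictly_increasing s -> vec_cv (fun k => qs (s k)) ql -> feasD a Om ql.
Proof.
  intros Hs Hq x0 Hx0. apply Rnot_lt_le. intros Hgt. set (eta := Rabs (Astar a ql x0) - 1).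
  destruct (choose_fun (fun i M => forall x, Rabs (a i x) <= M)) as [M HM].
  { intros i. apply (C0_bounded Om), Ha. }
  destruct (adist_cv M _ _ Hq (eta / 4)) as [N HN]; [unfold eta; lra|].
  set (q := qs (s N)). set (q' := qs (s (S N))).
  assert (Hclose : forall n, (N <= n)%nat -> adist M (qs (s n)) ql < eta / 4).
  { intros n Hn. specialize (HN n Hn). unfold Rdist in HN. rewrite Rminus_0_r in HN.
    pose proof (Rle_abs (adist M (qs (s n)) ql)). lra. }
  pose proof (Hclose N (le_n _)) as HD1. pose proof (Hclose (S N) (le_S _ _ (le_n _))) as HD2.
  fold q in HD1. fold q' in HD2.
  (* |A^* q| > 1 at x0, so a maximizer x of |A^* q| enters the later set Omega_{s(N+1)} *)
  pose proof (Astar_adist a M HM q ql x0) as Hx0d.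
  pose proof (Rabs_triang_inv (Astar a ql x0) (Astar a q x0)) as Ht. rewrite Rabs_minus_sym in Ht.
  destruct (exchange_adds_max (s N) x0 Hx0) as [x [HxS Hxmax]]; [unfold eta in *; fold q; lra|].
  fold q in Hxmax.
  assert (HO : Oms (s (S N)) x) by (apply (Oms_mono (S (s N))); [apply Hs | auto]).
  pose proof (proj1 (Hqs (s (S N))) x HO) as Hfeas. fold q' in Hfeas.
  (* but there |A^* q'| <= 1 although q' is close to q *)
  pose proof (Astar_adist a M HM q q' x). pose proof (adist_triang a M HM q q' ql).
  pose proof (Rabs_triang_inv (Astar a q x) (Astar a q' x)). unfold eta in *. lra.
Qed.

Lemma fstar_limit (s : nat -> nat) ql c :
  vec_cv (fun k => qs (s k)) ql -> (forall k, c <= v (s k)) ->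
  exists F, fstar f ql = Some F /\ F <= - c.
Proof.
  intros Hq Hc. apply fstar_le; auto. intros y w Hw.
  apply (cv_le_bound (fun k => dot (qs (s k)) y - w)).
  - apply CV_minus; [apply dot_cv; auto | apply cv_const; auto].
  - intros k. pose proof (fstar_ub f (qs (s k)) _ y w (proj2 (Hv (s k))) Hw). pose proof (Hc k). lra.
Qed.

(** A feasible limit point q of the dual iterates has f^*(q) <= -lim v_k, while
    f^*(q) >= f^*(q_opt) = -vs; hence the values converge to vs. *)
Lemma values_converge : Un_cv v vs.
Proof.
  destruct dual_bounded as [Q HQ]. destruct (bounded_vec_subseq qs Q HQ) as [s [ql [Hs Hq]]].
  pose proof (limit_dual_feasible s ql Hs Hq) as Hfe.
  intros eps He. assert (exists N, v N < vs + eps) as [N HN].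
  { apply NNPP; intros Hn. destruct (fstar_limit s ql (vs + eps) Hq) as [F [HF HFl]].
    - intros k. apply Rnot_lt_le. intros Hl. apply Hn; eauto.
    - pose proof (proj2 Hq_opt ql Hfe). rewrite (proj2 Hvs), HF in H. simpl in H. lra. }
  exists N. intros n Hn. unfold Rdist. pose proof (values_nonincreasing N n Hn). pose proof (values_ge_opt n).
  rewrite Rabs_right; lra.
Qed.

Lemma limit_dual_optimal (s : nat -> nat) ql :
  strictly_increasing s -> vec_cv (fun k => qs (s k)) ql -> solD a f Om ql.
Proof.
  intros Hs Hq. split; [apply (limit_dual_feasible s); auto|].
  destruct (fstar_limit s ql vs Hq) as [F [HF HFl]]; [intros; apply values_ge_opt|].
  intros q' Hq'. pose proof (proj2 Hq_opt q' Hq'). rewrite (proj2 Hvs) in H. rewrite HF.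
  destruct (fstar f q'); simpl in *; auto. lra.
Qed.

(** Weak-* limit points of the primal iterates attain the value vs: by
    lower semicontinuity of the norm and of f, J(mu) <= lim v_k = vs. *)
Lemma limit_primal_value (s : nat -> nat) mu :
  strictly_increasing s -> IsMeas Om mu -> weakstar_cv Om (fun k => mus (s k)) mu ->
  Jfun Om a f mu = Some vs.
Proof.
  intros Hs Hmu Hw.
  assert (HA : vec_cv (fun k => Aop a (mus (s k))) (Aop a mu)) by (intros i; apply Hw, Ha).
  assert (Hele : ele (f (Aop a mu)) (Some (vs - mnorm Om mu))).
  { apply (lsc_limit f _ _ _ Hf_lsc HA). intros eps He.
    destruct (mnorm_weakstar_lsc Om _ mu (fun k => proj1 (Hmus (s k))) Hmu Hw (eps / 2)) as [N1 HN1]; [lra|].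
    destruct (values_converge (eps / 2)) as [N2 HN2]; [lra|].
    exists (max N1 N2). intros k Hk.
    destruct (Jfun_some Om a f _ _ (proj1 (Hv (s k)))) as [w [Hw' Hvw]]. rewrite Hw'. simpl.
    specialize (HN1 k ltac:(lia)). specialize (HN2 (s k) ltac:(pose proof (si_ge s Hs k); lia)).
    unfold Rdist in HN2. pose proof (Rle_abs (v (s k) - vs)). lra. }
  destruct (f (Aop a mu)) as [W|] eqn:HW; [|contradiction].
  pose proof (Jfun_of Om a f mu W HW) as HJ. simpl in Hele.
  destruct Hmu_opt as [_ [_ Hopt]]. specialize (Hopt mu Hmu (supported_full Om _ Hmu)).
  rewrite (proj1 Hvs), HJ in Hopt. simpl in Hopt. rewrite HJ. f_equal. lra.
Qed.

Lemma subseq_limit (s0 : nat -> nat) : strictly_increasing s0 ->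
  exists t mu_inf q_inf, strictly_increasing t /\
    weakstar_cv Om (fun k => mus (s0 (t k))) mu_inf /\
    vec_cv (fun k => qs (s0 (t k))) q_inf /\
    solP Om a f Om mu_inf /\ solD a f Om q_inf /\
    ecv (fun k => Jfun Om a f (mus (s0 (t k)))) (Jfun Om a f mu_inf).
Proof.
  intros Hs0. destruct mnorm_bounded as [B HB]. destruct dual_bounded as [Q HQ].
  destruct (weak_star_compact Om HOm_open (fun k => mus (s0 k)) B) as [t1 [mi [Ht1 [Hmi Hw]]]];
    [intros k; apply (Hmus (s0 k)) | intros k; apply HB|].
  destruct (bounded_vec_subseq (fun k => qs (s0 (t1 k))) Q) as [t2 [ql [Ht2 Hq]]]; [intros; apply HQ|].
  set (s := fun k => s0 (t1 (t2 k))).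
  assert (Hs : strictly_increasing s) by exact (si_comp s0 _ Hs0 (si_comp t1 t2 Ht1 Ht2)).
  assert (Hw2 : weakstar_cv Om (fun k => mus (s k)) mi)
    by (intros phi Hphi; apply (cv_subseq (fun k => mus (s0 (t1 k)) phi)); auto).
  pose proof (limit_primal_value s mi Hs Hmi Hw2) as HJ.
  exists (fun k => t1 (t2 k)), mi, ql. split; [apply si_comp; auto|]. split; auto. split; auto.
  split; [|split; [apply (limit_dual_optimal s); auto|]].
  - split; auto. split; [apply supported_full; auto|].
    intros nu Hnu Hsn. rewrite HJ, <- (proj1 Hvs). apply Hmu_opt; auto.
  - rewrite HJ. simpl. intros eps He. destruct (values_converge eps He) as [N HN]. exists N.
    intros n Hn. exists (v (s n)). split; [apply (proj1 (Hv (s n)))|].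
    apply HN. pose proof (si_ge s Hs n). lia.
Qed.

End Algorithm.

Theorem mainTheorem1
  (d m : nat) (Hd : (1 <= d)%nat) (Hm : (1 <= m)%nat) (Om : vec d -> Prop)
  (HOm_open : is_open Om) (HOm_ne : exists x, Om x)
  (a : Fin.t m -> vec d -> R) (Ha : forall i, C0 Om (a i))
  (f : vec m -> ereal)
  (Hf_proper : proper f) (Hf_convex : convex f) (Hf_lsc : lsc f)
  (Hf_bdd : bounded_below f)
  (Oms : nat -> vec d -> Prop) (mus : nat -> meas d) (qs : nat -> vec m)
  (HOm0 : forall x, Oms O x -> Om x)
  (Hmus : forall k, solP Om a f (Oms k) (mus k))
  (Hqs : forall k, solD a f (Oms k) (qs k))
  (Hgap_k : forall k, no_gap Om a f (mus k) (qs k))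
  (Hgap : exists mu q, solP Om a f Om mu /\ solD a f Om q /\ no_gap Om a f mu q)
  (Hstep : forall k x, Oms (S k) x <-> (Oms k x \/ Xset Om a (qs k) x))
  (Hyp : H1 f \/ H2 Om a (Oms O)) :
  (exists (sub : nat -> nat) (mu_inf : meas d) (q_inf : vec m),
      strictly_increasing sub /\
      weakstar_cv Om (fun k => mus (sub k)) mu_inf /\
      vec_cv (fun k => qs (sub k)) q_inf /\
      solP Om a f Om mu_inf /\ solD a f Om q_inf /\
      ecv (fun k => Jfun Om a f (mus (sub k))) (Jfun Om a f mu_inf)) /\
  ((forall mu1 mu2, solP Om a f Om mu1 -> solP Om a f Om mu2 -> mu1 = mu2) ->
     forall mu_star, solP Om a f Om mu_star -> weakstar_cv Om mus mu_star) /\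
  ((forall q1 q2, solD a f Om q1 -> solD a f Om q2 -> q1 = q2) ->
     forall q_star, solD a f Om q_star -> vec_cv qs q_star).
Proof.
  destruct Hgap as [mu_opt [q_opt [HP [HD [vs Hvs]]]]].
  destruct (choose_fun (fun k w => Jfun Om a f (mus k) = Some w /\ fstar f (qs k) = Some (- w)))
    as [v Hv]; [intros k; apply Hgap_k|].
  pose proof (subseq_limit d m Om HOm_open a Ha f Hf_proper Hf_lsc Hf_bdd Oms mus qs Hmus Hqs
                Hstep Hyp mu_opt q_opt HP HD v Hv vs Hvs) as Hsub.
  split; [|split].
  - (* the whole sequence, viewed as a subsequence of itself *)
    destruct (Hsub (fun k => k) si_id) as [t [mi [qi H]]]. exists t, mi, qi. exact H.
  - intros Huniq mu_star Hstar phi Hphi. apply cv_of_subsubseq. intros s0 Hs0.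
    destruct (Hsub s0 Hs0) as [t [mi [qi [Ht [Hw [_ [Hsol _]]]]]]].
    exists t. split; auto. rewrite <- (Huniq mi mu_star Hsol Hstar). apply Hw; auto.
  - intros Huniq q_star Hstar i. apply cv_of_subsubseq. intros s0 Hs0.
    destruct (Hsub s0 Hs0) as [t [mi [qi [Ht [_ [Hq [_ [Hsol _]]]]]]]].
    exists t. split; auto. rewrite <- (Huniq qi q_star Hsol Hstar). apply Hq.
Qed.
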